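(* Let $p$ be an admissible linear order on $\mathcal A=L_e\sqcup L_o\sqcup G$, and let $p^t$ be the reverse order. Let $\phi_{p^t}$ be the generalised RSK shape map computed with the order $p^t$ and with the roles of $L_e$ and $L_o$ exchanged (i.e. with $L_e^t=L_o$, $L_o^t=L_e$, and $G$ unchanged). Then for every word $w\in\mathcal A^n$ whose letters from $G$ are pairwise distinct (hence for $\mu_n$-almost every $w$), $\phi_p(w)=\phi_{p^t}(w)^t$, where $\lambda^t$ denotes the transpose of a Young diagram $\lambda$.
   Context: Alphabet: $\mathcal A=L_e\sqcup L_o\sqcup G$ where $L_e=\{x_1,x_2,\dots\}$, $L_o=\{y_1,y_2,\dots\}$ are discrete and $G$ is identified with an interval of $\mathbb R$; $\mu_n=\mu_1^{\otimes n}$ where $\mu_1(\{x_i\})=\alpha_i$, $\mu_1(\{y_j\})=\beta_j$, and $\mu_1$ restricted to $G$ is $\gamma$ times normalized Lebesgue measure, for Thoma parameters $\mathcal P$. An admissible order is a linear order $p$ on $\mathcal A$ for which $G$ is an interval and whose restriction to $G$ is the usual order of reals or its reverse. Generalised RSK (row insertion) w.r.t. an order and a splitting into $L_e$, $L_o$, $G$: to insert a letter $x$ into a tableau $T$: in the first row, if $x\in L_e$ find the leftmost entry strictly greater than $x$; if $x\in L_o\cup G$ find the leftmost entry greater than or equal to $x$; if there is none, append $x$ at the end of the row and stop; otherwise $x$ replaces that entry and the replaced entry is inserted into the second row by the same rule, and so on (an entry bumped out of the last row forms a new row). For $w=z_1\cdots z_n$, $R(w)$ is obtained by inserting $z_1,\dots,z_n$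 successively into the empty tableau, and $\phi_p(w)$ is the shape of $R(w)$. *)

From Stdlib Require Import Reals List Arith.
Import ListNotations.
Open Scope R_scope.

(* The alphabet A = L_e ⊔ L_o ⊔ G.  L_e = {x_1,x_2,...} is [Le i],
   L_o = {y_1,y_2,...} is [Lo j], and G is an interval I of R, a letter
   of G being [Gr x] with [I x]. *)
Inductive Letter : Type :=
  | Le : nat -> Letter
  | Lo : nat -> Letter
  | Gr : R -> Letter.

Definition inA (I : R -> Prop) (a : Letter) : Prop :=
  match a with Gr x => I x | _ => True end.

Definition isLe (a : Letter) : bool := match a with Le _ => true | _ => false end.
Definition isLo (a : Letter) : bool := match a with Lo _ => true | _ => false end.
Definition isG  (a : Letter) : bool := match a with Gr _ => true | _ => false end.

Definition is_interval (I : R -> Prop) : Prop :=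
  forall x y z, I x -> I z -> x <= y <= z -> I y.

Definition Rleb (x y : R) : bool := if Rle_dec x y then true else false.

Definition admissible (I : R -> Prop) (le : Letter -> Letter -> bool) : Prop :=
  (forall a, inA I a -> le a a = true) /\
  (forall a b, inA I a -> inA I b -> le a b = true -> le b a = true -> a = b) /\
  (forall a b c, inA I a -> inA I b -> inA I c ->
     le a b = true -> le b c = true -> le a c = true) /\
  (forall a b, inA I a -> inA I b -> le a b = true \/ le b a = true) /\
  (forall a b c, inA I a -> inA I b -> inA I c ->
     isG a = true -> isG c = true -> le a b = true -> le b c = true -> isG b = true) /\
  ((forall x y, I x -> I y -> le (Gr x) (Gr y) = Rleb x y) \/
   (forall x y, I x -> I y -> le (Gr x) (Gr y) = Rleb y x)).

Definition rev_order (le : Letter -> Letter -> bool) : Letter -> Letter -> bool :=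
  fun a b => le b a.

(* Generalised RSK row insertion w.r.t. the order [le] and the splitting in
   which the letters satisfying [strictE] form the "L_e" part (strict bumping:
   leftmost entry strictly greater); all other letters (L_o and G) bump the
   leftmost entry greater than or equal to them. *)
Definition ltb (le : Letter -> Letter -> bool) (a b : Letter) : bool :=
  le a b && negb (le b a).

Fixpoint row_insert (le : Letter -> Letter -> bool) (strictE : Letter -> bool)
    (x : Letter) (r : list Letter) : option Letter * list Letter :=
  match r with
  | [] => (None, [x])
  | e :: r' =>
      if (if strictE x then ltb le x e else le x e)
      then (Some e, x :: r')
      else let (b, r'') := row_insert le strictE x r' in (b, e :: r'')
  end.

Fixpoint tab_insert (le : Letter -> Letter -> bool) (strictE : Letter -> bool)
    (x : Letter) (T : list (list Letter)) : list (list Letter) :=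
  match T with
  | [] => [[x]]
  | r :: T' =>
      match row_insert le strictE x r with
      | (None, r') => r' :: T'
      | (Some y, r') => r' :: tab_insert le strictE y T'
      end
  end.

Definition RSK (le : Letter -> Letter -> bool) (strictE : Letter -> bool)
    (w : list Letter) : list (list Letter) :=
  fold_left (fun T x => tab_insert le strictE x T) w [].

Definition shape (T : list (list Letter)) : list nat := map (@length Letter) T.

Definition phi (le : Letter -> Letter -> bool) (strictE : Letter -> bool)
    (w : list Letter) : list nat := shape (RSK le strictE w).

Definition transpose (l : list nat) : list nat :=
  map (fun j => length (filter (fun k => Nat.ltb j k) l)) (seq 0 (list_max l)).

Definition G_letters (w : list Letter) : list R :=
  flat_map (fun a => match a with Gr x => [x] | _ => [] end) w.

(** Row insertion is abstracted over a relation [R], "b may follow a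
    in a row", required only to be transitive with transitive complement (a
    row relation); the two insertions of the theorem use the relation [R] of
    the order and, for the reverse order, its complement [compl_rel R] --
    exactly so on a word whose G-letters are distinct, since insertion never
    compares a letter with itself.  For a row relation we prove Greene's
    theorem: Greene's invariant of [w] (the largest number of letters covered
    by [k] disjoint [R]-chain subsequences) is invariant under Knuth moves,
    [w] is Knuth equivalent to the reading words of both [rsk R w] and
    [rsk (compl_rel R) w], and on these tableaux the invariant equals the size
    of the [k] first rows, resp. of the [k] first columns.  Equal prefix sums
    for all [k] then force the two shapes to be transposes of each other. *)

From Stdlib Require Import Reals List Arith Lia Relations Permutation Classical Bool.
Import ListNotations.
Open Scope nat_scope.

(** * Row relations

    A relation [R a b] reads "b may follow a in a row of a tableau".  On a
    domain [P] it is a row relation when both [R] and its complement are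
    transitive; the second condition is stated in the equivalent form
    [R a b -> R a c \/ R c b].  For the generalised RSK of the paper,
    [R a b] means "a < b, or a = b is a letter of L_e". *)

Record row_rel {A : Type} (P : A -> Prop) (R : A -> A -> bool) : Prop := {
  rr_trans : forall a b c, P a -> P b -> P c ->
    R a b = true -> R b c = true -> R a c = true;
  rr_split : forall a b c, P a -> P b -> P c ->
    R a b = true -> R a c = true \/ R c b = true }.
Arguments rr_trans {A P R}.
Arguments rr_split {A P R}.

Definition compl_rel {A : Type} (R : A -> A -> bool) : A -> A -> bool :=
  fun a b => negb (R a b).

Section RowRelation.
Variables (A : Type) (P : A -> Prop) (R : A -> A -> bool).
Hypothesis HR : row_rel P R.

Lemma rr_compl_trans a b c : P a -> P b -> P c ->
  R a b = false -> R b c = false -> R a c = false.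
Proof.
  intros Pa Pb Pc Hab Hbc. destruct (R a c) eqn:E; auto.
  destruct (rr_split HR a c b Pa Pc Pb E); congruence.
Qed.

Lemma rr_contra_r a b c : P a -> P b -> P c ->
  R a b = true -> R a c = false -> R b c = false.
Proof.
  intros Pa Pb Pc Hab Hac. destruct (R b c) eqn:E; auto.
  rewrite (rr_trans HR a b c Pa Pb Pc Hab E) in Hac; discriminate.
Qed.

Lemma rr_contra_l a b c : P a -> P b -> P c ->
  R b c = true -> R a c = false -> R a b = false.
Proof.
  intros Pa Pb Pc Hbc Hac. destruct (R a b) eqn:E; auto.
  rewrite (rr_trans HR a b c Pa Pb Pc E Hbc) in Hac; discriminate.
Qed.

Lemma rr_split_l a b c : P a -> P b -> P c ->
  R a b = true -> R c b = false -> R a c = true.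
Proof.
  intros Pa Pb Pc Hab Hcb. destruct (rr_split HR a b c Pa Pb Pc Hab); congruence.
Qed.

Lemma rr_split_r a b c : P a -> P b -> P c ->
  R a b = true -> R a c = false -> R c b = true.
Proof.
  intros Pa Pb Pc Hab Hac. destruct (rr_split HR a b c Pa Pb Pc Hab); congruence.
Qed.

(* The complement of a row relation is again a row relation: this symmetry
   is what exchanges rows and columns in the main theorem. *)
Lemma row_rel_compl : row_rel P (compl_rel R).
Proof.
  unfold compl_rel; split; intros a b c Pa Pb Pc.
  - intros Hab Hbc. apply negb_true_iff in Hab, Hbc. apply negb_true_iff.
    exact (rr_compl_trans a b c Pa Pb Pc Hab Hbc).
  - intros Hab. apply negb_true_iff in Hab.
    destruct (R a c) eqn:Eac; destruct (R c b) eqn:Ecb; simpl; auto.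
    rewrite (rr_trans HR a c b Pa Pc Pb Eac Ecb) in Hab; discriminate.
Qed.

End RowRelation.
Arguments rr_compl_trans {A P R} HR a b c.
Arguments rr_contra_r {A P R} HR a b c.
Arguments rr_contra_l {A P R} HR a b c.
Arguments rr_split_l {A P R} HR a b c.
Arguments rr_split_r {A P R} HR a b c.

Definition chain {A : Type} (R : A -> A -> bool) (l : list A) : Prop :=
  ForallOrdPairs (fun a b => R a b = true) l.

Section Chains.
Variables (A : Type) (R : A -> A -> bool).

Lemma chain_app l1 l2 : chain R (l1 ++ l2) <->
  chain R l1 /\ chain R l2 /\ (forall x y, In x l1 -> In y l2 -> R x y = true).
Proof.
  unfold chain; induction l1 as [|a l1 IH]; simpl.
  - split; [intros H; repeat split; auto; try constructor; intros x y []|tauto].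
  - split.
    + intros H; inversion H as [|? ? Ha Hl]; subst.
      apply IH in Hl as [H1 [H2 H3]]. apply Forall_app in Ha as [Ha1 Ha2].
      rewrite Forall_forall in Ha2.
      split; [constructor; auto|split; auto]. intros x y [<-|Hx] Hy; auto.
    + intros [H1 [H2 H3]]. inversion H1; subst. constructor.
      * apply Forall_app; split; auto. apply Forall_forall; intros; apply H3; simpl; auto.
      * apply IH; repeat split; auto.
Qed.

Lemma chain_cons a l :
  chain R (a :: l) <-> (forall y, In y l -> R a y = true) /\ chain R l.
Proof.
  unfold chain; split.
  - intros H; inversion H; subst; split; auto. rewrite <- Forall_forall; auto.
  - intros [H1 H2]; constructor; auto. rewrite Forall_forall; auto.
Qed.

Lemma chain_short l : length l <= 1 -> chain R l.
Proof.
  intros H. destruct l as [|x [|y l]]; simpl in H; try lia; repeat constructor.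
Qed.

Lemma chain_two a b : chain R [a; b] <-> R a b = true.
Proof.
  rewrite chain_cons. split.
  - intros [H _]; apply H; simpl; auto.
  - intros H; split; [intros y [<-|[]]; auto|apply chain_short; auto].
Qed.

Lemma chain_mid X Y Z : chain R (X ++ Y ++ Z) <->
  chain R X /\ chain R Y /\ chain R Z /\
  (forall x y, In x X -> In y Y -> R x y = true) /\
  (forall x y, In x X -> In y Z -> R x y = true) /\
  (forall x y, In x Y -> In y Z -> R x y = true).
Proof.
  rewrite chain_app, chain_app. split.
  - intros [H1 [[H2 [H3 H4]] H5]].
    repeat split; auto; intros; apply H5; auto; apply in_or_app; auto.
  - intros [H1 [H2 [H3 [H4 [H5 H6]]]]]. repeat split; auto.
    intros x y Hx Hy; apply in_app_or in Hy as [Hy|Hy]; auto.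
Qed.

Lemma chain_snoc r x :
  chain R r -> (forall e, In e r -> R e x = true) -> chain R (r ++ [x]).
Proof.
  intros H1 H2; apply chain_app; repeat split; auto using chain_short.
  intros e f He [<-|[]]; auto.
Qed.

End Chains.

(** The four configurations below are exactly what a Knuth move does to the
    chains of a chain decomposition: a letter of a chain is replaced by a
    neighbour, or two chains exchange their tails. *)

Section ChainExchange.
Variables (A : Type) (P : A -> Prop) (R : A -> A -> bool).
Hypothesis HR : row_rel P R.

Lemma chain_subst_head X Y a b c :
  (forall x, In x X -> P x) -> (forall x, In x Y -> P x) -> P a -> P b -> P c ->
  R c b = true -> R c a = false ->
  chain R (X ++ [a; b] ++ Y) -> chain R (X ++ [c; b] ++ Y).
Proof.
  intros PX PY Pa Pb Pc Hcb Hca Hch.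
  apply chain_mid in Hch as [A1 [_ [C1 [D1 [E1 F1]]]]].
  apply chain_mid; repeat split; auto.
  - apply chain_two; auto.
  - intros x y Hx [<-|[<-|[]]].
    + apply (rr_split_l HR x a c); auto. apply D1; simpl; auto.
    + apply D1; simpl; auto.
  - intros x y [<-|[<-|[]]] Hy.
    + apply (rr_trans HR c b y); auto. apply F1; simpl; auto.
    + apply F1; simpl; auto.
Qed.

Lemma chain_exchange_head X1 Y1 X2 Y2 a b c :
  (forall x, In x X1 -> P x) -> (forall x, In x Y1 -> P x) ->
  (forall x, In x X2 -> P x) -> (forall x, In x Y2 -> P x) -> P a -> P b -> P c ->
  R c b = true -> R c a = false ->
  chain R (X1 ++ [c] ++ Y1) -> chain R (X2 ++ [a; b] ++ Y2) ->
  chain R (X1 ++ [c; b] ++ Y2) /\ chain R (X2 ++ [a] ++ Y1).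
Proof.
  intros PX1 PY1 PX2 PY2 Pa Pb Pc Hcb Hca H1 H2.
  apply chain_mid in H1 as [A1 [_ [C1 [D1 [E1 F1]]]]].
  apply chain_mid in H2 as [A2 [_ [C2 [D2 [E2 F2]]]]].
  assert (Hcy : forall y, In y Y2 -> R c y = true).
  { intros y Hy; apply (rr_trans HR c b y); auto. apply F2; simpl; auto. }
  assert (Hay : forall y, In y Y1 -> R a y = true).
  { intros y Hy; apply (rr_split_r HR c y a); auto. apply F1; simpl; auto. }
  split; apply chain_mid; repeat split; auto using chain_short.
  - apply chain_two; auto.
  - intros x y Hx [<-|[<-|[]]].
    + apply D1; simpl; auto.
    + apply (rr_trans HR x c b); auto. apply D1; simpl; auto.
  - intros x y Hx Hy. apply (rr_trans HR x c y); auto. apply D1; simpl; auto.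
  - intros x y [<-|[<-|[]]] Hy; auto. apply F2; simpl; auto.
  - intros x y Hx [<-|[]]. apply D2; simpl; auto.
  - intros x y Hx Hy. apply (rr_trans HR x a y); auto. apply D2; simpl; auto.
  - intros x y [<-|[]] Hy; auto.
Qed.

Lemma chain_subst_tail X Y a b c :
  (forall x, In x X -> P x) -> (forall x, In x Y -> P x) -> P a -> P b -> P c ->
  R a b = true -> R c b = false ->
  chain R (X ++ [a; c] ++ Y) -> chain R (X ++ [a; b] ++ Y).
Proof.
  intros PX PY Pa Pb Pc Hab Hcb Hch.
  apply chain_mid in Hch as [A1 [_ [C1 [D1 [E1 F1]]]]].
  apply chain_mid; repeat split; auto.
  - apply chain_two; auto.
  - intros x y Hx [<-|[<-|[]]].
    + apply D1; simpl; auto.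
    + apply (rr_trans HR x a b); auto. apply D1; simpl; auto.
  - intros x y [<-|[<-|[]]] Hy.
    + apply F1; simpl; auto.
    + apply (rr_split_r HR c y b); auto. apply F1; simpl; auto.
Qed.

Lemma chain_exchange_tail X1 Y1 X2 Y2 a b c :
  (forall x, In x X1 -> P x) -> (forall x, In x Y1 -> P x) ->
  (forall x, In x X2 -> P x) -> (forall x, In x Y2 -> P x) -> P a -> P b -> P c ->
  R a b = true -> R c b = false ->
  chain R (X1 ++ [a; c] ++ Y1) -> chain R (X2 ++ [b] ++ Y2) ->
  chain R (X1 ++ [a; b] ++ Y2) /\ chain R (X2 ++ [c] ++ Y1).
Proof.
  intros PX1 PY1 PX2 PY2 Pa Pb Pc Hab Hcb H1 H2.
  apply chain_mid in H1 as [A1 [_ [C1 [D1 [E1 F1]]]]].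
  apply chain_mid in H2 as [A2 [_ [C2 [D2 [E2 F2]]]]].
  assert (Hay : forall y, In y Y2 -> R a y = true).
  { intros y Hy; apply (rr_trans HR a b y); auto. apply F2; simpl; auto. }
  assert (Hxc : forall x, In x X2 -> R x c = true).
  { intros x Hx; apply (rr_split_l HR x b c); auto. apply D2; simpl; auto. }
  split; apply chain_mid; repeat split; auto using chain_short.
  - apply chain_two; auto.
  - intros x y Hx [<-|[<-|[]]].
    + apply D1; simpl; auto.
    + apply (rr_trans HR x a b); auto. apply D1; simpl; auto.
  - intros x y Hx Hy. apply (rr_trans HR x a y); auto. apply D1; simpl; auto.
  - intros x y [<-|[<-|[]]] Hy; auto. apply F2; simpl; auto.
  - intros x y Hx [<-|[]]. auto.
  - intros x y Hx Hy. apply (rr_trans HR x c y); auto. apply F1; simpl; auto.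
  - intros x y [<-|[]] Hy. apply F1; simpl; auto.
Qed.

End ChainExchange.
Arguments chain_subst_head {A P R} HR X Y a b c.
Arguments chain_exchange_head {A P R} HR X1 Y1 X2 Y2 a b c.
Arguments chain_subst_tail {A P R} HR X Y a b c.
Arguments chain_exchange_tail {A P R} HR X1 Y1 X2 Y2 a b c.

(** * Chain decompositions and Greene's invariant

    A labelled word [z] gives each letter a label; it is a [k]-chain
    decomposition when all labels are at most [k] and, for every label
    [l <> 0], the letters labelled [l] (its [l]-th layer) form an [R]-chain.
    Label [0] means "not covered".  Greene's invariant of a word [w] is the
    largest number of letters covered by a [k]-chain decomposition of [w];
    [greene_ge R w k m] says that it is at least [m]. *)

Definition layer {A : Type} (l : nat) (z : list (A * nat)) : list A :=
  map fst (filter (fun p => snd p =? l) z).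

Definition covered {A : Type} (z : list (A * nat)) : nat :=
  length (filter (fun p => negb (snd p =? 0)) z).

Definition k_chains {A : Type} (R : A -> A -> bool) (k : nat) (z : list (A * nat)) : Prop :=
  Forall (fun p => snd p <= k) z /\ forall l, l <> 0 -> chain R (layer l z).

Definition greene_ge {A : Type} (R : A -> A -> bool) (w : list A) (k m : nat) : Prop :=
  exists z, map fst z = w /\ k_chains R k z /\ m <= covered z.

(* Exchanging two labels; used to let two chains swap their tails. *)
Definition swap_nat (l1 l2 x : nat) : nat :=
  if x =? l1 then l2 else if x =? l2 then l1 else x.

Definition swap_labels {A : Type} (l1 l2 : nat) (z : list (A * nat)) : list (A * nat) :=
  map (fun p => (fst p, swap_nat l1 l2 (snd p))) z.

Section LabelledWords.
Variable A : Type.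
Implicit Types (z : list (A * nat)) (x : A).

Lemma layer_app l z1 z2 : layer l (z1 ++ z2) = layer l z1 ++ layer l z2.
Proof. unfold layer; rewrite filter_app, map_app; auto. Qed.

Lemma layer_nil l : layer l (@nil (A * nat)) = [].
Proof. reflexivity. Qed.

Lemma layer_cons l x l' z :
  layer l ((x, l') :: z) = if l' =? l then x :: layer l z else layer l z.
Proof. unfold layer; simpl; destruct (l' =? l); auto. Qed.

Lemma layer_in_iff l z x : In x (layer l z) <-> In (x, l) z.
Proof.
  unfold layer; rewrite in_map_iff; split.
  - intros [[y m] [E Hp]]; simpl in E; subst.
    apply filter_In in Hp as [Hp E]; simpl in E. apply Nat.eqb_eq in E; subst; auto.
  - intros H; exists (x, l); split; auto. apply filter_In; split; auto; apply Nat.eqb_refl.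
Qed.

Lemma in_layer l z x : In x (layer l z) -> In x (map fst z).
Proof. rewrite layer_in_iff; intros H; apply (in_map fst _ _ H). Qed.

Lemma covered_app z1 z2 : covered (z1 ++ z2) = covered z1 + covered z2.
Proof. unfold covered; rewrite filter_app, length_app; auto. Qed.

Lemma covered_cons x l z : covered ((x, l) :: z) = (if l =? 0 then 0 else 1) + covered z.
Proof. unfold covered; simpl; destruct (l =? 0); auto. Qed.

Lemma covered_le_length z : covered z <= length z.
Proof. apply filter_length_le. Qed.

Lemma swap_nat_eqb l1 l2 m l : l1 <> l2 -> (swap_nat l1 l2 m =? l) = (m =? swap_nat l1 l2 l).
Proof.
  intros Hne; unfold swap_nat.
  destruct (Nat.eqb_spec m l1), (Nat.eqb_spec m l2), (Nat.eqb_spec l l1), (Nat.eqb_spec l l2);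
    subst; repeat match goal with |- context [?a =? ?b] => destruct (Nat.eqb_spec a b) end;
    auto; lia.
Qed.

Lemma layer_swap_labels l1 l2 l z : l1 <> l2 ->
  layer l (swap_labels l1 l2 z) = layer (swap_nat l1 l2 l) z.
Proof.
  intros Hne; unfold layer, swap_labels.
  induction z as [|p z IH]; simpl; auto. rewrite swap_nat_eqb by auto.
  destruct (snd p =? swap_nat l1 l2 l); simpl; rewrite IH; auto.
Qed.

Lemma covered_swap_labels l1 l2 z : l1 <> 0 -> l2 <> 0 ->
  covered (swap_labels l1 l2 z) = covered z.
Proof.
  intros H1 H2; induction z as [|[x l] z IH]; auto.
  unfold swap_labels in *; simpl; rewrite !covered_cons, IH; unfold swap_nat.
  destruct (Nat.eqb_spec l l1), (Nat.eqb_spec l l2);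
    repeat match goal with |- context [?a =? ?b] => destruct (Nat.eqb_spec a b) end; lia.
Qed.

Lemma map_fst_swap_labels l1 l2 z : map fst (swap_labels l1 l2 z) = map fst z.
Proof. unfold swap_labels; rewrite map_map; auto. Qed.

Lemma bounded_swap_labels k l1 l2 z : l1 <= k -> l2 <= k ->
  Forall (fun p => snd p <= k) z -> Forall (fun p => snd p <= k) (swap_labels l1 l2 z).
Proof.
  intros H1 H2 H; unfold swap_labels; rewrite Forall_map; eapply Forall_impl; [|exact H].
  intros p Hp; unfold swap_nat; simpl; destruct (snd p =? l1), (snd p =? l2); auto.
Qed.

Variable R : A -> A -> bool.

Lemma k_chains_app k z1 z2 : k_chains R k (z1 ++ z2) ->
  k_chains R k z1 /\ k_chains R k z2 /\
  (forall l x y, l <> 0 -> In x (layer l z1) -> In y (layer l z2) -> R x y = true).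
Proof.
  intros [HF Hc]. apply Forall_app in HF as [HF1 HF2].
  assert (Hc' : forall l, l <> 0 -> chain R (layer l z1) /\ chain R (layer l z2) /\
     (forall x y, In x (layer l z1) -> In y (layer l z2) -> R x y = true)).
  { intros l Hl; rewrite <- chain_app, <- layer_app; auto. }
  split; [|split]; [split; auto; intros l Hl; apply Hc'; auto ..|].
  intros l x y Hl; apply Hc'; auto.
Qed.

Lemma k_chains_adjacent k zu x1 x2 l zv : l <> 0 ->
  k_chains R k (zu ++ (x1, l) :: (x2, l) :: zv) -> R x1 x2 = true.
Proof.
  intros Hl [_ Hc]. specialize (Hc l Hl).
  rewrite layer_app, !layer_cons, Nat.eqb_refl in Hc.
  apply chain_app in Hc as [_ [Hc _]]. apply chain_cons in Hc as [Hc _]. apply Hc; simpl; auto.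
Qed.

Lemma k_chains_transpose k zu p q zv : (snd p = snd q -> snd p = 0) ->
  k_chains R k (zu ++ p :: q :: zv) ->
  k_chains R k (zu ++ q :: p :: zv) /\ covered (zu ++ q :: p :: zv) = covered (zu ++ p :: q :: zv).
Proof.
  intros Hne [HF Hc]. split; [split|].
  - apply Forall_app in HF as [H1 H2]; apply Forall_app; split; auto.
    inversion H2 as [|? ? Hp H3]; inversion H3; subst; repeat constructor; auto.
  - intros l Hl. specialize (Hc l Hl). destruct p as [x lp], q as [y lq]; simpl in Hne.
    assert (E : layer l ((y, lq) :: (x, lp) :: zv) = layer l ((x, lp) :: (y, lq) :: zv)).
    { unfold layer; simpl. destruct (Nat.eqb_spec lp l), (Nat.eqb_spec lq l); simpl; auto; lia. }
    rewrite layer_app, E, <- layer_app; auto.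
  - destruct p, q; rewrite !covered_app, !covered_cons; lia.
Qed.

Lemma k_chains_replace k zu t t' zv :
  Forall (fun p => snd p <= k) t' -> k_chains R k (zu ++ t ++ zv) ->
  (forall l, l <> 0 -> chain R (layer l zu ++ layer l t ++ layer l zv) ->
     chain R (layer l zu ++ layer l t' ++ layer l zv)) ->
  k_chains R k (zu ++ t' ++ zv).
Proof.
  intros Ht' [HF Hc] Hl. split.
  - rewrite !Forall_app in *; tauto.
  - intros l Hl0. specialize (Hc l Hl0). rewrite !layer_app in *. auto.
Qed.

Lemma k_chains_exchange k zu t t' zv l1 l2 :
  l1 <> 0 -> l2 <> 0 -> l1 <> l2 -> l1 <= k -> l2 <= k ->
  Forall (fun p => snd p <= k) t' -> k_chains R k (zu ++ t ++ zv) ->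
  (forall l, l <> l1 -> l <> l2 -> layer l t' = layer l t) ->
  chain R (layer l1 zu ++ layer l1 t' ++ layer l2 zv) ->
  chain R (layer l2 zu ++ layer l2 t' ++ layer l1 zv) ->
  k_chains R k (zu ++ t' ++ swap_labels l1 l2 zv).
Proof.
  intros H1 H2 H12 Hk1 Hk2 Ht' [HF Hc] Hother C1 C2. split.
  - rewrite !Forall_app in *. intuition auto. apply bounded_swap_labels; auto.
  - intros l Hl. rewrite !layer_app, layer_swap_labels by auto. unfold swap_nat.
    destruct (Nat.eqb_spec l l1) as [->|E1]; auto.
    destruct (Nat.eqb_spec l l2) as [->|E2]; auto.
    rewrite Hother by auto. specialize (Hc l Hl). rewrite !layer_app in Hc; auto.
Qed.

End LabelledWords.

(** * Knuth equivalence preserves Greene's invariant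

    Each move preserves [greene_ge R w k m]: a [k]-chain decomposition of
    one side is turned into one of the other side covering as many letters,
    either by transposing two letters of different chains or, when two of the
    three letters lie in the same chain, by one of the exchanges above. *)

Inductive knuth_move {A : Type} (R : A -> A -> bool) : list A -> list A -> Prop :=
  | knuth_move1 u v a b c : R c b = true -> R c a = false ->
      knuth_move R (u ++ c :: b :: a :: v) (u ++ c :: a :: b :: v)
  | knuth_move2 u v a b c : R a b = true -> R c b = false ->
      knuth_move R (u ++ a :: c :: b :: v) (u ++ c :: a :: b :: v).

Definition knuth_equiv {A : Type} (R : A -> A -> bool) : list A -> list A -> Prop :=
  clos_refl_sym_trans (list A) (knuth_move R).

Section KnuthEquivalence.
Variables (A : Type) (R : A -> A -> bool).

Lemma knuth_equiv_perm w1 w2 : knuth_equiv R w1 w2 -> Permutation w1 w2.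
Proof.
  induction 1 as [x y Hm| | |]; eauto using Permutation_sym, Permutation_trans.
  destruct Hm; apply Permutation_app_head; repeat constructor.
Qed.

(* A move for the complementary relation is a move for [R] read backwards. *)
Lemma knuth_equiv_compl w1 w2 : knuth_equiv (compl_rel R) w1 w2 -> knuth_equiv R w1 w2.
Proof.
  unfold knuth_equiv; induction 1 as [x y Hm| | |]; eauto using rst_refl, rst_sym, rst_trans.
  apply rst_sym, rst_step.
  destruct Hm as [u v a b c H1 H2|u v a b c H1 H2]; unfold compl_rel in *;
    apply negb_true_iff in H1; apply negb_false_iff in H2; constructor; auto.
Qed.

Lemma knuth_equiv_ctx w1 w2 p q : knuth_equiv R w1 w2 ->
  knuth_equiv R (p ++ w1 ++ q) (p ++ w2 ++ q).
Proof.
  unfold knuth_equiv; induction 1 as [x y Hm| | |]; eauto using rst_refl, rst_sym, rst_trans.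
  apply rst_step.
  destruct Hm as [u v a b c H1 H2|u v a b c H1 H2];
    rewrite !app_assoc, <- !(app_assoc _ _ q); simpl; constructor; auto.
Qed.

End KnuthEquivalence.

(* Computes the layers of an explicit labelled word, deciding label
   comparisons from the hypotheses. *)
Ltac layer_simpl :=
  rewrite ?layer_app, ?layer_cons, ?layer_nil in *;
  repeat match goal with
  | |- context [?a =? ?a] => rewrite Nat.eqb_refl
  | H : context [?a =? ?a] |- _ => rewrite Nat.eqb_refl in H
  | |- context [?a =? ?b] => rewrite (proj2 (Nat.eqb_neq a b)) by congruence
  | H : context [?a =? ?b] |- _ => rewrite (proj2 (Nat.eqb_neq a b)) in H by congruence
  end;
  cbn [app] in *.

Section KnuthGreene.
Variables (A : Type) (P : A -> Prop) (R : A -> A -> bool).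
Hypothesis HR : row_rel P R.

Lemma k_chains_bound k z x l : k_chains R k z -> In (x, l) z -> l <= k.
Proof. intros [HF _] Hx; rewrite Forall_forall in HF; apply (HF _ Hx). Qed.

Lemma k_chains_move1_back k zu zv a b c lc l :
  (forall x, In x (map fst zu) -> P x) -> (forall x, In x (map fst zv) -> P x) ->
  P a -> P b -> P c -> R c b = true -> R c a = false -> l <> 0 ->
  k_chains R k (zu ++ [(c, lc); (a, l); (b, l)] ++ zv) ->
  exists z, map fst z = map fst zu ++ c :: b :: a :: map fst zv /\ k_chains R k z /\
    covered z = covered (zu ++ [(c, lc); (a, l); (b, l)] ++ zv).
Proof.
  intros PU PV Pa Pb Pc Hcb Hca Hl Hz.
  assert (Hk : lc <= k /\ l <= k) by
    (split; eapply k_chains_bound; eauto; apply in_or_app; simpl; auto).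
  assert (PUl : forall l0 x, In x (layer l0 zu) -> P x) by eauto using in_layer.
  assert (PVl : forall l0 x, In x (layer l0 zv) -> P x) by eauto using in_layer.
  destruct (Nat.eq_dec lc 0) as [->|Hlc].
  - (* [c] is uncovered: it takes the place of [a] in chain [l] *)
    exists (zu ++ [(c, l); (b, l); (a, 0)] ++ zv). split; [|split].
    + rewrite map_app; reflexivity.
    + apply (k_chains_replace _ _ k zu [(c, 0); (a, l); (b, l)]); auto.
      { repeat constructor; simpl; lia. }
      intros l0 Hl0 Hch. destruct (Nat.eq_dec l0 l) as [->|E]; layer_simpl; auto.
      exact (chain_subst_head HR _ _ a b c (PUl l) (PVl l) Pa Pb Pc Hcb Hca Hch).
    + rewrite !covered_app, !covered_cons, (proj2 (Nat.eqb_neq l 0) Hl); simpl; lia.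
  - (* [c] lies in another chain [lc]: the chains continue with [c b] and [a]
       and exchange their tails *)
    assert (Hlcl : lc <> l).
    { intros ->. rewrite (k_chains_adjacent _ R k zu c a l ((b, l) :: zv) Hlc Hz) in Hca.
      discriminate. }
    pose proof Hz as [_ Hch].
    pose proof (Hch lc Hlc) as C1. pose proof (Hch l Hl) as C2. layer_simpl.
    destruct (chain_exchange_head HR _ _ _ _ a b c (PUl lc) (PVl lc) (PUl l) (PVl l)
                Pa Pb Pc Hcb Hca C1 C2) as [D1 D2].
    exists (zu ++ [(c, lc); (b, lc); (a, l)] ++ swap_labels lc l zv). split; [|split].
    + rewrite !map_app, map_fst_swap_labels; reflexivity.
    + apply (k_chains_exchange _ _ k zu [(c, lc); (a, l); (b, l)]); auto; try tauto.
      * repeat constructor; simpl; lia.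
      * intros l0 E1 E2; layer_simpl; reflexivity.
      * layer_simpl; exact D1.
      * layer_simpl; exact D2.
    + rewrite !covered_app, !covered_cons, covered_swap_labels by auto.
      rewrite (proj2 (Nat.eqb_neq l 0) Hl), (proj2 (Nat.eqb_neq lc 0) Hlc); simpl; lia.
Qed.

Lemma k_chains_move2 k zu zv a b c lb l :
  (forall x, In x (map fst zu) -> P x) -> (forall x, In x (map fst zv) -> P x) ->
  P a -> P b -> P c -> R a b = true -> R c b = false -> l <> 0 ->
  k_chains R k (zu ++ [(a, l); (c, l); (b, lb)] ++ zv) ->
  exists z, map fst z = map fst zu ++ c :: a :: b :: map fst zv /\ k_chains R k z /\
    covered z = covered (zu ++ [(a, l); (c, l); (b, lb)] ++ zv).
Proof.
  intros PU PV Pa Pb Pc Hab Hcb Hl Hz.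
  assert (Hk : l <= k /\ lb <= k) by
    (split; eapply k_chains_bound; eauto; apply in_or_app; simpl; auto).
  assert (PUl : forall l0 x, In x (layer l0 zu) -> P x) by eauto using in_layer.
  assert (PVl : forall l0 x, In x (layer l0 zv) -> P x) by eauto using in_layer.
  destruct (Nat.eq_dec lb 0) as [->|Hlb].
  - (* [b] is uncovered: it takes the place of [c] in chain [l] *)
    exists (zu ++ [(c, 0); (a, l); (b, l)] ++ zv). split; [|split].
    + rewrite map_app; reflexivity.
    + apply (k_chains_replace _ _ k zu [(a, l); (c, l); (b, 0)]); auto.
      { repeat constructor; simpl; lia. }
      intros l0 Hl0 Hch. destruct (Nat.eq_dec l0 l) as [->|E]; layer_simpl; auto.
      exact (chain_subst_tail HR _ _ a b c (PUl l) (PVl l) Pa Pb Pc Hab Hcb Hch).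
    + rewrite !covered_app, !covered_cons, (proj2 (Nat.eqb_neq l 0) Hl); simpl; lia.
  - (* [b] lies in another chain [lb]: the chains continue with [a b] and [c]
       and exchange their tails *)
    assert (Hlbl : lb <> l).
    { intros ->. rewrite (k_chains_adjacent _ R k (zu ++ [(a, l)]) c b l zv Hlb) in Hcb.
      - discriminate.
      - rewrite <- app_assoc; exact Hz. }
    pose proof Hz as [_ Hch].
    pose proof (Hch l Hl) as C1. pose proof (Hch lb Hlb) as C2. layer_simpl.
    destruct (chain_exchange_tail HR _ _ _ _ a b c (PUl l) (PVl l) (PUl lb) (PVl lb)
                Pa Pb Pc Hab Hcb C1 C2) as [D1 D2].
    exists (zu ++ [(c, lb); (a, l); (b, l)] ++ swap_labels l lb zv). split; [|split].
    + rewrite !map_app, map_fst_swap_labels; reflexivity.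
    + apply (k_chains_exchange _ _ k zu [(a, l); (c, l); (b, lb)]); auto; try tauto.
      * repeat constructor; simpl; lia.
      * intros l0 E1 E2; layer_simpl; reflexivity.
      * layer_simpl; exact D1.
      * layer_simpl; exact D2.
    + rewrite !covered_app, !covered_cons, covered_swap_labels by auto.
      rewrite (proj2 (Nat.eqb_neq l 0) Hl), (proj2 (Nat.eqb_neq lb 0) Hlb); simpl; lia.
Qed.

Lemma map_fst_split3 (z : list (A * nat)) u x y t v :
  map fst z = u ++ x :: y :: t :: v ->
  exists zu zv lx ly lt, z = zu ++ (x, lx) :: (y, ly) :: (t, lt) :: zv /\
    map fst zu = u /\ map fst zv = v.
Proof.
  intros E. apply map_eq_app in E as [zu [zr [-> [E1 E2]]]].
  apply map_eq_cons in E2 as [[x' lx] [z2 [-> [Ex E2]]]].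
  apply map_eq_cons in E2 as [[y' ly] [z3 [-> [Ey E2]]]].
  apply map_eq_cons in E2 as [[t' lt] [zv [-> [Et E2]]]].
  simpl in *; subst. exists zu, zv, lx, ly, lt; auto.
Qed.

Lemma greene_transpose k zu p q zv m : (snd p = snd q -> snd p = 0) ->
  k_chains R k (zu ++ p :: q :: zv) -> m <= covered (zu ++ p :: q :: zv) ->
  greene_ge R (map fst zu ++ fst q :: fst p :: map fst zv) k m.
Proof.
  intros Hne Hz Hm. destruct (k_chains_transpose _ R k zu p q zv Hne Hz) as [Hz' Hc].
  exists (zu ++ q :: p :: zv); split; [rewrite map_app; reflexivity|split; auto; lia].
Qed.

Lemma greene_ge_move w1 w2 k m : knuth_move R w1 w2 -> Forall P w1 ->
  greene_ge R w1 k m -> greene_ge R w2 k m.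
Proof.
  intros Hm HP [z [Ez [Hz Hc]]]. rewrite Forall_forall in HP.
  destruct Hm as [u v a b c Hcb Hca|u v a b c Hab Hcb];
    apply map_fst_split3 in Ez as [zu [zv [l1 [l2 [l3 [-> [<- <-]]]]]]];
    assert (PU : forall x, In x (map fst zu) -> P x) by (intros; apply HP, in_or_app; auto);
    assert (PV : forall x, In x (map fst zv) -> P x)
      by (intros; apply HP, in_or_app; right; simpl; auto);
    assert (Pa : P a) by (apply HP, in_or_app; right; simpl; auto);
    assert (Pb : P b) by (apply HP, in_or_app; right; simpl; auto);
    assert (Pc : P c) by (apply HP, in_or_app; right; simpl; auto).
  - (* [b] and [a] cannot be in the same chain, as [R b a] fails *)
    replace (map fst zu ++ c :: a :: b :: map fst zv)
      with (map fst (zu ++ [(c, l1)]) ++ a :: b :: map fst zv)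
      by (rewrite map_app, <- app_assoc; reflexivity).
    apply (greene_transpose k _ (b, l2) (a, l3)); [|rewrite <- app_assoc; auto ..].
    simpl; intros <-. destruct (Nat.eq_dec l2 0) as [|Hl2]; auto.
    assert (Hba : R b a = false) by (apply (rr_contra_r HR c b a); auto).
    rewrite (k_chains_adjacent _ R k (zu ++ [(c, l1)]) b a l2 zv Hl2) in Hba; [discriminate|].
    rewrite <- app_assoc; exact Hz.
  - destruct (Nat.eq_dec l1 l2) as [<-|Hne]; [destruct (Nat.eq_dec l1 0) as [->|Hl1]|].
    + apply (greene_transpose k zu (a, 0) (c, 0) ((b, l3) :: zv)); auto.
    + destruct (k_chains_move2 k zu zv a b c l3 l1 PU PV Pa Pb Pc Hab Hcb Hl1 Hz)
        as [z' [Ez' [Hz' Hc']]].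
      exists z'; split; [|split]; auto. rewrite Hc'; exact Hc.
    + apply (greene_transpose k zu (a, l1) (c, l2) ((b, l3) :: zv)); auto.
      simpl; intros; contradiction.
Qed.

Lemma greene_ge_move_back w1 w2 k m : knuth_move R w1 w2 -> Forall P w1 ->
  greene_ge R w2 k m -> greene_ge R w1 k m.
Proof.
  intros Hm HP [z [Ez [Hz Hc]]]. rewrite Forall_forall in HP.
  destruct Hm as [u v a b c Hcb Hca|u v a b c Hab Hcb];
    apply map_fst_split3 in Ez as [zu [zv [l1 [l2 [l3 [-> [<- <-]]]]]]];
    assert (PU : forall x, In x (map fst zu) -> P x) by (intros; apply HP, in_or_app; auto);
    assert (PV : forall x, In x (map fst zv) -> P x)
      by (intros; apply HP, in_or_app; right; simpl; auto);
    assert (Pa : P a) by (apply HP, in_or_app; right; simpl; auto);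
    assert (Pb : P b) by (apply HP, in_or_app; right; simpl; auto);
    assert (Pc : P c) by (apply HP, in_or_app; right; simpl; auto).
  - replace (map fst zu ++ c :: b :: a :: map fst zv)
      with (map fst (zu ++ [(c, l1)]) ++ b :: a :: map fst zv)
      by (rewrite map_app, <- app_assoc; reflexivity).
    destruct (Nat.eq_dec l2 l3) as [<-|Hne]; [destruct (Nat.eq_dec l2 0) as [->|Hl2]|].
    + apply (greene_transpose k _ (a, 0) (b, 0)); rewrite <- ?app_assoc; auto.
    + destruct (k_chains_move1_back k zu zv a b c l1 l2 PU PV Pa Pb Pc Hcb Hca Hl2 Hz)
        as [z' [Ez' [Hz' Hc']]].
      exists z'; split; [rewrite Ez', map_app, <- app_assoc; reflexivity|split; auto].
      rewrite Hc'; exact Hc.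
    + apply (greene_transpose k _ (a, l2) (b, l3)); rewrite <- ?app_assoc; auto.
      simpl; intros; contradiction.
  - (* [c] and [a] cannot be in the same chain, as [R c a] fails *)
    apply (greene_transpose k zu (c, l1) (a, l2) ((b, l3) :: zv)); auto.
    simpl; intros <-. destruct (Nat.eq_dec l1 0) as [|Hl1]; auto.
    pose proof (k_chains_adjacent _ R k zu c a l1 ((b, l3) :: zv) Hl1 Hz) as Hca.
    rewrite (rr_trans HR c a b) in Hcb; auto; discriminate.
Qed.

Lemma greene_ge_knuth w1 w2 k m : knuth_equiv R w1 w2 -> Forall P w1 ->
  greene_ge R w1 k m <-> greene_ge R w2 k m.
Proof.
  intros Hk. induction Hk as [x y Hm|x|x y Hxy IH|x y z Hxy IH1 Hyz IH2]; intros HP.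
  - split; [apply greene_ge_move|apply greene_ge_move_back]; auto.
  - tauto.
  - pose proof (Permutation_Forall (Permutation_sym (knuth_equiv_perm _ _ _ _ Hxy)) HP) as HPx.
    specialize (IH HPx); tauto.
  - pose proof (Permutation_Forall (knuth_equiv_perm _ _ _ _ Hxy) HP) as HPy.
    rewrite IH1, IH2; tauto.
Qed.

End KnuthGreene.

(** * Row insertion for a row relation

    Rows are listed from the top; the reading word of
    a tableau lists its rows from the bottom one to the top one. *)

Fixpoint row_ins {A : Type} (R : A -> A -> bool) (x : A) (r : list A) : option A * list A :=
  match r with
  | [] => (None, [x])
  | e :: r' => if R e x then let (b, r'') := row_ins R x r' in (b, e :: r'') else (Some e, x :: r')
  end.

Fixpoint tab_ins {A : Type} (R : A -> A -> bool) (x : A) (T : list (list A)) : list (list A) :=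
  match T with
  | [] => [[x]]
  | r :: T' => match row_ins R x r with
               | (None, r') => r' :: T'
               | (Some y, r') => r' :: tab_ins R y T'
               end
  end.

Definition rsk {A : Type} (R : A -> A -> bool) (w : list A) : list (list A) :=
  fold_left (fun T x => tab_ins R x T) w [].

Definition reading_word {A : Type} (T : list (list A)) : list A := concat (rev T).

Section Insertion.
Variables (A : Type) (R : A -> A -> bool).

Lemma row_ins_none x r r' : row_ins R x r = (None, r') ->
  r' = r ++ [x] /\ forall e, In e r -> R e x = true.
Proof.
  revert r'; induction r as [|e r IH]; simpl; intros r' E.
  - inversion E; split; auto.
  - destruct (R e x) eqn:Ee; [|discriminate].
    destruct (row_ins R x r) as [b r''] eqn:E2. inversion E; subst.
    destruct (IH _ eq_refl) as [-> H]. split; auto. intros e' [<-|He]; auto.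
Qed.

Lemma row_ins_some x r y r' : row_ins R x r = (Some y, r') ->
  exists a b, r = a ++ y :: b /\ r' = a ++ x :: b /\
    (forall e, In e a -> R e x = true) /\ R y x = false.
Proof.
  revert r'; induction r as [|e r IH]; simpl; intros r' E.
  - discriminate.
  - destruct (R e x) eqn:Ee.
    + destruct (row_ins R x r) as [b r''] eqn:E2. inversion E; subst.
      destruct (IH _ eq_refl) as [a [b' [-> [-> [H1 H2]]]]].
      exists (e :: a), b'; repeat split; auto. intros e' [<-|He]; auto.
    + inversion E; subst. exists [], r; repeat split; auto.
Qed.

Lemma tab_ins_perm x T : Permutation (concat (tab_ins R x T)) (x :: concat T).
Proof.
  revert x; induction T as [|r T IH]; intros x; simpl; auto.
  destruct (row_ins R x r) as [[y|] r'] eqn:E; simpl.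
  - apply row_ins_some in E as [a [b [-> [-> _]]]].
    eapply Permutation_trans; [apply Permutation_app_head, IH|].
    rewrite <- !app_assoc; simpl.
    apply Permutation_sym, Permutation_cons_app, Permutation_app_head, Permutation_middle.
  - apply row_ins_none in E as [-> _]. rewrite <- app_assoc; simpl.
    apply Permutation_sym, Permutation_cons_app; auto.
Qed.

Lemma rsk_snoc w x : rsk R (w ++ [x]) = tab_ins R x (rsk R w).
Proof. unfold rsk; rewrite fold_left_app; auto. Qed.

Lemma rsk_perm w : Permutation (concat (rsk R w)) w.
Proof.
  induction w as [|x w IH] using rev_ind; simpl; auto.
  rewrite rsk_snoc. eapply Permutation_trans; [apply tab_ins_perm|].
  eapply Permutation_trans; [apply perm_skip, IH|]. apply Permutation_cons_append.
Qed.

Lemma reading_word_cons (r : list A) T : reading_word (r :: T) = reading_word T ++ r.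
Proof. unfold reading_word; simpl; rewrite concat_app; simpl; rewrite app_nil_r; auto. Qed.

End Insertion.

(** [below R r s] says that row [s] may be placed under row [r]: it is not
    longer, and no entry of [s] may be followed (in a row) by the entry just
    above it. *)

Definition below {A : Type} (R : A -> A -> bool) (r s : list A) : Prop :=
  length s <= length r /\ forall j d, j < length s -> R (nth j s d) (nth j r d) = false.

Fixpoint tableau {A : Type} (R : A -> A -> bool) (T : list (list A)) : Prop :=
  match T with
  | [] => True
  | r :: T' => chain R r /\ r <> [] /\
      match T' with [] => True | s :: _ => below R r s end /\ tableau R T'
  end.

Section Tableaux.
Variables (A : Type) (P : A -> Prop) (R : A -> A -> bool).
Hypothesis HR : row_rel P R.

Lemma nth_app_cons_other (a b : list A) x y i d : i <> length a ->
  nth i (a ++ x :: b) d = nth i (a ++ y :: b) d.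
Proof.
  intros Hi. destruct (Nat.lt_ge_cases i (length a)).
  - rewrite !app_nth1; auto.
  - rewrite !app_nth2 by lia. destruct (i - length a) eqn:E; [lia|]; auto.
Qed.

Lemma row_ins_shape y s : exists c d,
  snd (row_ins R y s) = c ++ y :: d /\ (forall e, In e c -> R e y = true) /\
  ((s = c /\ d = []) \/ exists z, s = c ++ z :: d).
Proof.
  destruct (row_ins R y s) as [[z|] s'] eqn:E; simpl.
  - apply row_ins_some in E as [c [d [-> [-> [Hc _]]]]].
    exists c, d; repeat split; eauto.
  - apply row_ins_none in E as [-> Hs]. exists s, []; repeat split; auto.
Qed.

Lemma row_ins_chain x r : P x -> Forall P r -> chain R r -> chain R (snd (row_ins R x r)).
Proof.
  intros Px HP Hch. rewrite Forall_forall in HP.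
  destruct (row_ins R x r) as [[y|] r'] eqn:E; simpl.
  - apply row_ins_some in E as [a [b [-> [-> [Ha Hyx]]]]].
    apply chain_app in Hch as [H1 [H2 H3]]. apply chain_cons in H2 as [H4 H5].
    apply chain_app; repeat split; auto.
    + apply chain_cons; split; auto. intros e He.
      apply (rr_split_r HR y e x); auto; apply HP; rewrite in_app_iff; simpl; auto.
    + intros e f He [<-|Hf]; auto. apply H3; simpl; auto.
  - apply row_ins_none in E as [-> Hs]. apply chain_snoc; auto.
Qed.

(* When [x] bumps [y] from row [r], inserting [y] into the row [s] below
   keeps it below the new row: [y] lands weakly to the left of [x]. *)
Lemma below_bump x r y r' s :
  (forall e, In e (x :: r ++ s) -> P e) -> below R r s ->
  row_ins R x r = (Some y, r') -> below R r' (snd (row_ins R y s)).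
Proof.
  intros HP [Hl Hd] E. apply row_ins_some in E as [a [b [-> [-> [Ha Hyx]]]]].
  assert (PA : forall e, In e a -> P e) by (intros; apply HP; simpl; rewrite !in_app_iff; auto).
  assert (PS : forall e, In e s -> P e) by (intros; apply HP; simpl; rewrite !in_app_iff; auto).
  assert (Px : P x) by (apply HP; simpl; auto).
  assert (Py : P y) by (apply HP; simpl; rewrite !in_app_iff; simpl; auto).
  rewrite length_app in Hl; simpl in Hl.
  destruct (row_ins_shape y s) as [c [d [-> [Hc Hs]]]].
  assert (Hlen_s : length c <= length s) by (destruct Hs as [[-> _]|[z ->]]; rewrite ?length_app; lia).
  assert (Hca : length c <= length a).
  { destruct (Nat.le_gt_cases (length c) (length a)) as [|Hlt]; auto. exfalso.
    assert (Es : nth (length a) s y = nth (length a) c y)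
      by (destruct Hs as [[-> _]|[z ->]]; [|apply app_nth1]; auto).
    specialize (Hd (length a) y ltac:(lia)). rewrite Es, nth_middle, Hc in Hd;
      [discriminate|apply nth_In; auto]. }
  split.
  - destruct Hs as [[-> ->]|[z ->]]; rewrite !length_app in *; simpl in *; lia.
  - intros j e Hj. destruct (Nat.eq_dec j (length c)) as [->|Hjc].
    + rewrite nth_middle. destruct (Nat.eq_dec (length c) (length a)) as [Eca|Nca].
      * rewrite Eca, nth_middle; exact Hyx.
      * rewrite app_nth1 by lia.
        assert (Hn : In (nth (length c) a e) a) by (apply nth_In; lia).
        apply (rr_contra_l HR y _ x); auto.
    + assert (Hjs : j < length s /\ nth j (c ++ y :: d) e = nth j s e).
      { rewrite length_app in Hj; simpl in Hj.
        destruct Hs as [[-> ->]|[z ->]]; simpl in *.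
        - split; [lia|]. apply app_nth1; lia.
        - rewrite length_app; simpl; split; [lia|]. apply nth_app_cons_other; auto. }
      destruct Hjs as [Hjs ->]. specialize (Hd j e Hjs).
      destruct (Nat.eq_dec j (length a)) as [->|Hja].
      * rewrite nth_middle in *. apply (rr_compl_trans HR _ y x); auto. apply PS, nth_In; auto.
      * rewrite (nth_app_cons_other a b x y) by auto. exact Hd.
Qed.

Lemma tab_ins_head y s T : exists T', tab_ins R y (s :: T) = snd (row_ins R y s) :: T'.
Proof. simpl; destruct (row_ins R y s) as [[z|] s']; simpl; eauto. Qed.

Lemma tableau_tab_ins x T : tableau R T -> (forall e, In e (x :: concat T) -> P e) ->
  tableau R (tab_ins R x T).
Proof.
  revert x; induction T as [|r T IH]; intros x Ht HP.
  - simpl; repeat split; auto using chain_short. discriminate.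
  - destruct Ht as [Hc [Hne [Hd Ht]]]. simpl.
    assert (Px : P x) by (apply HP; simpl; auto).
    assert (HPr : Forall P r) by (apply Forall_forall; intros e He; apply HP; simpl; rewrite in_app_iff; auto).
    pose proof (row_ins_chain x r Px HPr Hc) as Hc'.
    destruct (row_ins R x r) as [[y|] r'] eqn:E; simpl in Hc'.
    + pose proof E as E'. apply row_ins_some in E' as [a [b [Er [Er' _]]]].
      assert (HPT : forall e, In e (y :: concat T) -> P e).
      { intros e [<-|He]; apply HP; simpl; rewrite in_app_iff; [rewrite Er, in_app_iff; simpl|]; auto. }
      split; [|split; [|split]]; auto.
      * rewrite Er'; destruct a; discriminate.
      * destruct T as [|s T].
        -- apply (below_bump x r y r' []); auto.
           split; simpl; [lia|intros; lia].
        -- destruct (tab_ins_head y s T) as [T' ET]. rewrite ET.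
           apply (below_bump x r y r' s); auto.
           intros e He; apply HP; simpl in *; rewrite !in_app_iff in *; tauto.
    + apply row_ins_none in E as [-> Hs]. split; [|split; [|split]]; auto.
      * destruct r; discriminate.
      * destruct T as [|s T]; auto. destruct Hd as [Hl Hd]. split.
        -- rewrite length_app; simpl; lia.
        -- intros j d Hj. rewrite app_nth1 by lia. apply Hd; auto.
Qed.

Lemma tableau_rows T : tableau R T -> Forall (chain R) T.
Proof. induction T as [|r T IH]; simpl; auto. intros [H1 [_ [_ H2]]]; constructor; auto. Qed.

Lemma rsk_tableau w : Forall P w -> tableau R (rsk R w).
Proof.
  induction w as [|x w IH] using rev_ind; intros HP; simpl; auto.
  assert (Hp : Permutation (w ++ [x]) (x :: concat (rsk R w))).
  { eapply Permutation_trans; [apply Permutation_sym, Permutation_cons_append|].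
    apply perm_skip, Permutation_sym, rsk_perm. }
  pose proof (Permutation_Forall Hp HP) as HP'. rewrite Forall_forall in HP'.
  apply Forall_app in HP as [HP1 _]. rewrite rsk_snoc. apply tableau_tab_ins; auto.
Qed.

End Tableaux.

(** * The reading word of [rsk R w] is Knuth equivalent to [w]

    Inserting [x] into a row [r] that bumps [y] is realised by Knuth moves:
    [r x = a y b x ~ a y x b ~ y a x b], the first step moving [x] leftwards
    past [b] with the first move, the second moving [y] to the front with the
    second move.  Rows being read from bottom to top, each insertion step is
    a Knuth equivalence on reading words. *)

Section KnuthInsertion.
Variables (A : Type) (P : A -> Prop) (R : A -> A -> bool).
Hypothesis HR : row_rel P R.

Lemma knuth_sink_left x b : forall c, P x -> (forall e, In e (c :: b) -> P e) ->
  chain R (c :: b) -> (forall e, In e (c :: b) -> R e x = false) ->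
  knuth_equiv R (c :: b ++ [x]) (c :: x :: b).
Proof.
  induction b as [|b1 b IHb]; intros c Px HP Hch Hx; simpl; [apply rst_refl|].
  apply chain_cons in Hch as [Hc Hch].
  eapply rst_trans.
  - pose proof (IHb b1 Px (fun e He => HP e (or_intror He)) Hch
                   (fun e He => Hx e (or_intror He))) as K.
    pose proof (knuth_equiv_ctx _ R _ _ [c] [] K) as K'.
    simpl in K'; rewrite !app_nil_r in K'; exact K'.
  - apply rst_step, (knuth_move1 R [] b x b1 c); [apply Hc|apply Hx]; simpl; auto.
Qed.

Lemma knuth_raise_front y t rest a : P y ->
  chain R (a ++ [t]) -> (forall e, In e (a ++ [t]) -> R y e = false) ->
  knuth_equiv R (a ++ y :: t :: rest) (y :: a ++ t :: rest).
Proof.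
  intros Py; induction a as [|a1 a IHa]; intros Hch Hy; simpl; [apply rst_refl|].
  simpl in Hch. apply chain_cons in Hch as [Hc Hch].
  eapply rst_trans.
  - pose proof (IHa Hch (fun e He => Hy e (or_intror He))) as K.
    pose proof (knuth_equiv_ctx _ R _ _ [a1] [] K) as K'.
    simpl in K'; rewrite !app_nil_r in K'; exact K'.
  - apply rst_step. destruct a as [|a2 a]; simpl in *.
    + apply (knuth_move2 R [] rest a1 t y); auto.
    + apply (knuth_move2 R [] (a ++ t :: rest) a1 a2 y); auto.
Qed.

Lemma knuth_row_ins x r y r' : P x -> Forall P r -> chain R r ->
  row_ins R x r = (Some y, r') -> knuth_equiv R (r ++ [x]) (y :: r').
Proof.
  intros Px HP Hch E. rewrite Forall_forall in HP.
  apply row_ins_some in E as [a [b [-> [-> [Ha Hyx]]]]].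
  apply chain_app in Hch as [Ha' [Hyb Hab]].
  assert (Py : P y) by (apply HP; apply in_or_app; simpl; auto).
  assert (Hsink : knuth_equiv R (y :: b ++ [x]) (y :: x :: b)).
  { apply knuth_sink_left; auto.
    - intros e He; apply HP; apply in_or_app; auto.
    - intros e [<-|He]; auto. apply chain_cons in Hyb as [Hyb _].
      apply (rr_contra_r HR y e x); auto. apply HP; apply in_or_app; simpl; auto. }
  pose proof (knuth_equiv_ctx _ R _ _ a [] Hsink) as K. rewrite !app_nil_r in K.
  eapply rst_trans; [rewrite <- app_assoc; exact K|].
  apply knuth_raise_front; auto.
  - apply chain_snoc; auto.
  - intros e He. apply in_app_or in He as [He|[<-|[]]]; auto.
    apply (rr_contra_l HR y e x); auto; apply HP; apply in_or_app; auto.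
Qed.

Lemma knuth_tab_ins x T : P x -> Forall P (concat T) -> Forall (chain R) T ->
  knuth_equiv R (reading_word T ++ [x]) (reading_word (tab_ins R x T)).
Proof.
  revert x; induction T as [|r T IH]; intros x Px HP Hch; simpl; [apply rst_refl|].
  inversion Hch as [|? ? Hr HT]; subst. simpl in HP. apply Forall_app in HP as [HPr HPT].
  destruct (row_ins R x r) as [[y|] r'] eqn:E; rewrite !reading_word_cons.
  - assert (Py : P y).
    { apply row_ins_some in E as [a [b [-> _]]].
      rewrite Forall_forall in HPr; apply HPr, in_or_app; simpl; auto. }
    pose proof (knuth_equiv_ctx _ R _ _ (reading_word T) [] (knuth_row_ins x r y r' Px HPr Hr E))
      as K1.
    pose proof (knuth_equiv_ctx _ R _ _ [] r' (IH y Py HPT HT)) as K2.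
    rewrite !app_nil_r in K1. rewrite <- !app_assoc in K2.
    eapply rst_trans; [rewrite <- app_assoc; exact K1|exact K2].
  - apply row_ins_none in E as [-> _]. rewrite <- app_assoc. apply rst_refl.
Qed.

Lemma rsk_knuth w : Forall P w -> knuth_equiv R w (reading_word (rsk R w)).
Proof.
  induction w as [|x w IH] using rev_ind; intros HP; [apply rst_refl|].
  apply Forall_app in HP as [HP1 HP2]. rewrite rsk_snoc.
  eapply rst_trans; [exact (knuth_equiv_ctx _ R _ _ [] [x] (IH HP1))|].
  apply knuth_tab_ins.
  - inversion HP2; auto.
  - apply (Permutation_Forall (Permutation_sym (rsk_perm _ R w))); auto.
  - apply tableau_rows, (rsk_tableau _ P); auto.
Qed.

End KnuthInsertion.

(** * Greene's invariant of a tableau: upper bounds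

    Let [z] be a [k]-chain decomposition of the reading word of a tableau.
    - If the rows are [compl_rel R]-chains, a chain meets each row at most
      once, so a row of length [n] contributes at most [min k n].
    - If the tableau is an [R]-tableau, a chain meets each column at most
      once (an entry may not be followed by the one above it), so column [c]
      contributes at most [min k (height of c)]; summing over columns gives
      the total length of the [k] first rows. *)

Definition cover_labels {A : Type} (z : list (A * nat)) : list nat :=
  map snd (filter (fun p => negb (snd p =? 0)) z).

Definition col_label {A : Type} (c : nat) (zr : list (A * nat)) : list nat :=
  match nth_error zr c with Some p => if snd p =? 0 then [] else [snd p] | None => [] end.

Definition col_labels {A : Type} (c : nat) (Z : list (list (A * nat))) : list nat :=
  flat_map (col_label c) Z.

Definition covered_from {A : Type} (c : nat) (Z : list (list (A * nat))) : nat :=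
  list_sum (map (fun zr => covered (skipn c zr)) Z).

Fixpoint nonincreasing (l : list nat) : Prop :=
  match l with
  | x :: ((y :: _) as t) => y <= x /\ nonincreasing t
  | _ => True
  end.

Section LabelCounting.
Variable A : Type.
Implicit Types (z zr : list (A * nat)) (Z : list (list (A * nat))).

Lemma labelled_reading_word z T : map fst z = reading_word T ->
  exists Z, map (map fst) Z = T /\ z = concat (rev Z).
Proof.
  assert (Hsplit : forall L z, map fst z = concat L ->
    exists Z, map (map fst) Z = L /\ z = concat Z).
  { induction L as [|r L IH]; intros z0 E; simpl in *.
    - exists []; destruct z0; simpl in *; auto; discriminate.
    - apply map_eq_app in E as [z1 [z2 [-> [E1 E2]]]].
      destruct (IH _ E2) as [Z [<- ->]]. exists (z1 :: Z); simpl; rewrite E1; auto. }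
  unfold reading_word; intros E. apply Hsplit in E as [Z [E1 ->]].
  exists (rev Z); rewrite rev_involutive, map_rev, E1, rev_involutive; auto.
Qed.

Lemma covered_concat_rev Z : covered (concat (rev Z)) = list_sum (map covered Z).
Proof.
  induction Z as [|r Z IH]; simpl; auto.
  rewrite concat_app, covered_app, IH; simpl; rewrite app_nil_r; lia.
Qed.

Lemma cover_labels_length z : length (cover_labels z) = covered z.
Proof. unfold cover_labels, covered; rewrite length_map; auto. Qed.

Lemma in_cover_labels z l : In l (cover_labels z) -> exists x, In (x, l) z /\ l <> 0.
Proof.
  unfold cover_labels; intros Hl; apply in_map_iff in Hl as [[x l'] [<- Hp]].
  apply filter_In in Hp as [Hp E]. exists x; split; auto.
  simpl in E; destruct (Nat.eqb_spec l' 0); simpl in E; auto; discriminate.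
Qed.

Lemma nodup_labels_bound k (L : list nat) : NoDup L ->
  (forall l, In l L -> l <> 0 /\ l <= k) -> length L <= k.
Proof.
  intros H1 H2. replace k with (length (seq 1 k)) by apply length_seq.
  apply NoDup_incl_length; auto. intros x Hx. apply in_seq. specialize (H2 x Hx); lia.
Qed.

Lemma covered_skipn c zr : covered (skipn c zr) = length (col_label c zr) + covered (skipn (S c) zr).
Proof.
  revert c; induction zr as [|[x l] zr IH]; intros c; unfold col_label in *; simpl.
  - destruct c; auto.
  - destruct c; simpl; [rewrite covered_cons; destruct (l =? 0)|]; auto.
Qed.

Lemma covered_from_step c Z : covered_from c Z = length (col_labels c Z) + covered_from (S c) Z.
Proof.
  induction Z as [|zr Z IH]; [reflexivity|]. unfold covered_from, col_labels, list_sum in *.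
  cbn [map fold_right flat_map]. rewrite covered_skipn, IH, length_app; lia.
Qed.

Lemma covered_from_beyond c Z : Forall (fun zr => length zr <= c) Z -> covered_from c Z = 0.
Proof.
  induction 1; [reflexivity|]. unfold covered_from, list_sum in *; cbn [map fold_right].
  rewrite skipn_all2 by auto. simpl; lia.
Qed.

Lemma col_labels_length c Z :
  length (col_labels c Z) <= length (filter (fun n => c <? n) (map (@length _) Z)).
Proof.
  induction Z as [|zr Z IH]; simpl; auto. rewrite length_app. unfold col_label.
  destruct (nth_error zr c) eqn:E.
  - assert (c < length zr) by (apply nth_error_Some; congruence).
    rewrite (proj2 (Nat.ltb_lt c (length zr))) by auto. simpl. destruct (snd p =? 0); simpl; lia.
  - destruct (c <? length zr); simpl; lia.
Qed.

Lemma nth_error_map_fst zr c p d : nth_error zr c = Some p ->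
  nth c (map fst zr) d = fst p /\ c < length zr.
Proof.
  intros E. assert (Hc : c < length zr) by (apply nth_error_Some; congruence). split; auto.
  rewrite (nth_error_nth' _ (fst p, 0)) in E by auto. injection E as E1.
  rewrite <- E1, (nth_indep _ d (fst (fst p, 0))) by (rewrite length_map; auto).
  apply (map_nth fst zr).
Qed.

Lemma nonincreasing_le x l : nonincreasing (x :: l) -> forall y, In y l -> y <= x.
Proof.
  revert x; induction l as [|z l IH]; intros x Hn y Hy; [destruct Hy|].
  destruct Hn as [Hzx Hn]. destruct Hy as [<-|Hy]; auto. specialize (IH z Hn y Hy); lia.
Qed.

Lemma filter_firstn_nonincreasing c k l : nonincreasing l ->
  length (filter (fun n => c <? n) (firstn k l)) = Nat.min k (length (filter (fun n => c <? n) l)).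
Proof.
  assert (Hsmall : forall l', (forall y, In y l' -> y <= c) -> filter (fun n => c <? n) l' = []).
  { induction l' as [|y l' IH]; intros H; simpl; auto.
    destruct (Nat.ltb_spec c y); [specialize (H y (or_introl eq_refl)); lia|].
    apply IH; intros; apply H; simpl; auto. }
  revert k; induction l as [|x l IH]; intros k Hn; simpl; [destruct k; auto|].
  destruct k; simpl; auto.
  assert (Hn' : nonincreasing l) by (destruct l; simpl in *; tauto).
  destruct (Nat.ltb_spec c x); simpl; [rewrite IH; auto|].
  assert (Hle : forall y, In y l -> y <= c)
    by (intros y Hy; pose proof (nonincreasing_le x l Hn y Hy); lia).
  rewrite (Hsmall l Hle), (Hsmall (firstn k l)); simpl; auto.
  intros y Hy; apply Hle. rewrite <- (firstn_skipn k l); apply in_or_app; auto.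
Qed.

Lemma sum_sub_step c l : list_sum (map (fun n => n - c) l) =
  list_sum (map (fun n => n - S c) l) + length (filter (fun n => c <? n) l).
Proof.
  induction l as [|x l IH]; simpl; auto. rewrite IH. destruct (Nat.ltb_spec c x); simpl; lia.
Qed.

End LabelCounting.

Section GreeneUpper.
Variables (A : Type) (P : A -> Prop) (R : A -> A -> bool).
Hypothesis HR : row_rel P R.

Lemma k_chains_label_bound k z l : k_chains R k z -> In l (cover_labels z) -> l <> 0 /\ l <= k.
Proof.
  intros [HF _] Hl. apply in_cover_labels in Hl as [x [Hx Hl0]]. split; auto.
  rewrite Forall_forall in HF; apply (HF _ Hx).
Qed.

(* An [R]-chain meets a [compl_rel R]-chain at most once. *)
Lemma covered_antichain k zr : chain (compl_rel R) (map fst zr) -> k_chains R k zr ->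
  covered zr <= k.
Proof.
  intros Hn Hz. rewrite <- cover_labels_length.
  apply nodup_labels_bound; [|intros l; apply k_chains_label_bound; auto].
  induction zr as [|[x l] zr IH]; simpl; [constructor|].
  simpl in Hn. apply chain_cons in Hn as [Hn1 Hn2].
  assert (Hz' : k_chains R k zr) by (apply (k_chains_app _ R k [(x, l)] zr) in Hz; tauto).
  unfold cover_labels; simpl. destruct (Nat.eqb_spec l 0) as [|Hl]; simpl; auto.
  constructor; auto. intros Hin. apply in_cover_labels in Hin as [y [Hy _]].
  destruct Hz as [_ Hc]. specialize (Hc l Hl). rewrite layer_cons, Nat.eqb_refl in Hc.
  apply chain_cons in Hc as [Hc _].
  specialize (Hc y (proj2 (layer_in_iff _ _ _ _) Hy)).
  specialize (Hn1 y (in_map fst _ _ Hy)). unfold compl_rel in Hn1. rewrite Hc in Hn1; discriminate.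
Qed.

Lemma covered_antichain_rows k Z : Forall (fun zr => chain (compl_rel R) (map fst zr)) Z ->
  k_chains R k (concat (rev Z)) ->
  covered (concat (rev Z)) <= list_sum (map (fun zr => Nat.min k (length zr)) Z).
Proof.
  induction Z as [|zr Z IH]; simpl; intros HF Hz; auto.
  inversion HF as [|? ? Hzr HZ]; subst. rewrite concat_app in *; simpl in *; rewrite app_nil_r in *.
  apply k_chains_app in Hz as [Hz1 [Hz2 _]]. rewrite covered_app.
  specialize (IH HZ Hz1). pose proof (covered_antichain k zr Hzr Hz2).
  pose proof (covered_le_length _ zr). lia.
Qed.

Lemma below_trans r s t : (forall e, In e (r ++ s ++ t) -> P e) ->
  below R r s -> below R s t -> below R r t.
Proof.
  intros HP [H1 H2] [H3 H4]. split; [lia|]. intros j d Hj.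
  assert (Pnth : forall l, In l [r; s; t] -> j < length l -> P (nth j l d)).
  { intros l Hl Hjl. apply HP. rewrite !in_app_iff.
    destruct Hl as [<-|[<-|[<-|[]]]]; auto using nth_In. }
  apply (rr_compl_trans HR _ (nth j s d)); try apply Pnth; simpl; auto; try lia.
  all: first [apply H2 | apply H4]; lia.
Qed.

Lemma tableau_below T' : forall r, tableau R (r :: T') -> Forall P (concat (r :: T')) ->
  forall s, In s T' -> below R r s.
Proof.
  induction T' as [|s1 T'' IH]; intros r Ht HP s Hs; [destruct Hs|].
  destruct Ht as [_ [_ [Hd Ht]]]. destruct Hs as [<-|Hs]; auto.
  simpl in HP. rewrite !Forall_app in HP; destruct HP as [HPr [HPs HPT]].
  apply (below_trans r s1 s); auto.
  - rewrite Forall_forall in *. intros e He. rewrite !in_app_iff in He.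
    destruct He as [He|[He|He]]; auto. apply HPT, in_concat; eauto.
  - apply IH; auto. simpl; apply Forall_app; auto.
Qed.

Lemma col_labels_range k c Z : k_chains R k (concat (rev Z)) ->
  forall l, In l (col_labels c Z) -> l <> 0 /\ l <= k.
Proof.
  intros [HF _] l Hl. unfold col_labels in Hl. apply in_flat_map in Hl as [zr [Hzr Hl]].
  unfold col_label in Hl. destruct (nth_error zr c) as [p|] eqn:E; [|destruct Hl].
  destruct (Nat.eqb_spec (snd p) 0); [destruct Hl|]. destruct Hl as [<-|[]]. split; auto.
  rewrite Forall_forall in HF. apply HF, in_concat. exists zr; split; [apply in_rev; rewrite rev_involutive; auto|].
  eapply nth_error_In; eauto.
Qed.

(* A chain meets each column of an [R]-tableau at most once. *)
Lemma col_labels_nodup k c Z : tableau R (map (map fst) Z) ->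
  Forall P (concat (map (map fst) Z)) -> k_chains R k (concat (rev Z)) -> NoDup (col_labels c Z).
Proof.
  induction Z as [|zr Z IH]; intros Ht HP Hz; simpl; [constructor|].
  simpl in Hz. rewrite concat_app in Hz; simpl in Hz; rewrite app_nil_r in Hz.
  apply k_chains_app in Hz as [Hz1 [Hz2 Hx]].
  assert (Ht' : tableau R (map (map fst) Z)) by (simpl in Ht; tauto).
  assert (HP' : Forall P (concat (map (map fst) Z))) by (simpl in HP; apply Forall_app in HP; tauto).
  specialize (IH Ht' HP' Hz1).
  unfold col_label at 1. destruct (nth_error zr c) as [p|] eqn:E; simpl; auto.
  destruct (Nat.eqb_spec (snd p) 0) as [|Hp0]; simpl; auto.
  constructor; auto. intros Hin. unfold col_labels in Hin. apply in_flat_map in Hin as [zs [Hzs Hin]].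
  unfold col_label in Hin. destruct (nth_error zs c) as [q|] eqn:E2; [|destruct Hin].
  destruct (Nat.eqb_spec (snd q) 0); [destruct Hin|]. destruct Hin as [Eq|[]].
  assert (Rqp : R (fst q) (fst p) = true).
  { apply (Hx (snd p)); auto; apply layer_in_iff; destruct p, q; simpl in *; subst.
    - apply in_concat. exists zs; split; [apply in_rev; rewrite rev_involutive; auto|].
      eapply nth_error_In; eauto.
    - eapply nth_error_In; eauto. }
  assert (Hd : below R (map fst zr) (map fst zs)).
  { apply (tableau_below (map (map fst) Z)); auto. apply in_map; auto. }
  destruct (nth_error_map_fst _ _ _ _ (fst p) E) as [Ep Hcp].
  destruct (nth_error_map_fst _ _ _ _ (fst p) E2) as [Eq' Hcq].
  destruct Hd as [_ Hd]. specialize (Hd c (fst p)). rewrite Ep, Eq', length_map in Hd.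
  rewrite Hd in Rqp; auto; discriminate.
Qed.

Lemma tableau_nonincreasing T : tableau R T -> nonincreasing (map (@length _) T).
Proof.
  induction T as [|r T IH]; simpl; auto. intros [_ [_ [Hd Ht]]].
  destruct T as [|s T]; simpl; auto. destruct Hd as [Hl _]. split; auto. apply IH; auto.
Qed.

Lemma covered_from_bound k Z : tableau R (map (map fst) Z) ->
  Forall P (concat (map (map fst) Z)) -> k_chains R k (concat (rev Z)) ->
  forall n c, Forall (fun zr => length zr <= c + n) Z ->
  covered_from c Z <= list_sum (map (fun m => m - c) (firstn k (map (@length _) Z))).
Proof.
  intros Ht HP Hz.
  assert (Hni : nonincreasing (map (@length _) Z)).
  { pose proof (tableau_nonincreasing _ Ht) as X. rewrite map_map in X.
    erewrite map_ext in X; [exact X|]. intros; rewrite length_map; auto. }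
  induction n as [|n IHn]; intros c HF.
  - rewrite covered_from_beyond; [lia|]. eapply Forall_impl; [|exact HF]. simpl; intros; lia.
  - rewrite covered_from_step, sum_sub_step.
    assert (Hrest : covered_from (S c) Z <=
                    list_sum (map (fun m => m - S c) (firstn k (map (@length _) Z)))).
    { apply IHn. eapply Forall_impl; [|exact HF]. simpl; intros; lia. }
    assert (Hcol : length (col_labels c Z) <=
                   length (filter (fun m => c <? m) (firstn k (map (@length _) Z)))).
    { rewrite filter_firstn_nonincreasing by auto.
      pose proof (col_labels_length _ c Z).
      pose proof (nodup_labels_bound k _ (col_labels_nodup k c Z Ht HP Hz)
                    (col_labels_range k c Z Hz)). lia. }
    lia.
Qed.

Lemma covered_tableau_bound k Z : tableau R (map (map fst) Z) ->
  Forall P (concat (map (map fst) Z)) -> k_chains R k (concat (rev Z)) ->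
  covered (concat (rev Z)) <= list_sum (firstn k (map (@length _) Z)).
Proof.
  intros Ht HP Hz.
  set (M := list_max (map (@length _) Z)).
  assert (HF : Forall (fun zr => length zr <= 0 + M) Z).
  { apply Forall_forall; intros zr Hzr. simpl. unfold M.
    pose proof (proj1 (list_max_le _ _) (Nat.le_refl M)) as Hmax.
    rewrite Forall_forall in Hmax. apply Hmax, in_map; auto. }
  pose proof (covered_from_bound k Z Ht HP Hz M 0 HF) as Hb.
  unfold covered_from in Hb. rewrite <- covered_concat_rev in Hb.
  replace (map (fun m => m - 0) (firstn k (map (@length _) Z)))
    with (firstn k (map (@length _) Z)) in Hb; [exact Hb|].
  rewrite <- map_id at 1. apply map_ext; intros; lia.
Qed.

End GreeneUpper.

(** * Greene's invariant of a tableau: lower bounds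

    Labelling the [i]-th row of a tableau by [i+1] for [i < k] covers the [k]
    first rows with [k] chains when the rows are [R]-chains.  Labelling the
    [j]-th entry of every row by [j+1] for [j < k] decomposes into [k] chains
    (the first [k] columns) when the rows are [compl_rel R]-chains forming a
    [compl_rel R]-tableau; it covers [min k n] letters of a row of length [n]. *)

Definition label_row {A : Type} (lab : nat) (r : list A) : list (A * nat) :=
  map (fun x => (x, lab)) r.

Fixpoint label_rows {A : Type} (i k : nat) (T : list (list A)) : list (list (A * nat)) :=
  match T with
  | [] => []
  | r :: T' => label_row (if i <? k then S i else 0) r :: label_rows (S i) k T'
  end.

Fixpoint label_cols {A : Type} (j k : nat) (r : list A) : list (A * nat) :=
  match r with
  | [] => []
  | x :: r' => (x, if j <? k then S j else 0) :: label_cols (S j) k r'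
  end.

Section GreeneLower.
Variables (A : Type) (P : A -> Prop) (R : A -> A -> bool).
Hypothesis HR : row_rel P R.

Lemma reading_word_relabel (f : list A -> list (A * nat)) T :
  (forall r, map fst (f r) = r) -> map fst (concat (rev (map f T))) = reading_word T.
Proof.
  intros Hf; unfold reading_word. rewrite concat_map, map_rev, map_map.
  f_equal; f_equal. rewrite <- (map_id T) at 2. apply map_ext; auto.
Qed.

Lemma in_concat_rev {B : Type} (x : B) Z : In x (concat (rev Z)) -> exists r, In r Z /\ In x r.
Proof.
  intros H; apply in_concat in H as [r [Hr Hx]]; exists r; split; auto; apply in_rev; auto.
Qed.

Lemma layer_label_row l lab (r : list A) : layer l (label_row lab r) = if lab =? l then r else [].
Proof.
  induction r as [|x r IH]; simpl; [destruct (lab =? l); auto|].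
  unfold label_row in *; simpl; rewrite layer_cons, IH. destruct (lab =? l); auto.
Qed.

Lemma covered_label_row lab (r : list A) : covered (label_row lab r) = if lab =? 0 then 0 else length r.
Proof.
  induction r as [|x r IH]; simpl; [destruct (lab =? 0); auto|].
  unfold label_row in *; simpl; rewrite covered_cons, IH. destruct (lab =? 0); auto.
Qed.

Lemma label_rows_props k T : forall i, Forall (chain R) T ->
  let z := concat (rev (label_rows i k T)) in
  Forall (fun p => snd p <= k) z /\
  (forall l, l <> 0 -> chain R (layer l z) /\ (l <= i -> layer l z = [])) /\
  covered z = list_sum (firstn (k - i) (map (@length _) T)).
Proof.
  induction T as [|r T IH]; intros i HF; simpl.
  - repeat split; auto; try constructor. destruct (k - i); auto.
  - inversion HF as [|? ? Hr HT]; subst. destruct (IH (S i) HT) as [F1 [F2 F3]].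
    rewrite concat_app; simpl; rewrite app_nil_r. split; [|split].
    + apply Forall_app; split; auto. unfold label_row; apply Forall_map, Forall_forall; intros; simpl.
      destruct (Nat.ltb_spec i k); lia.
    + intros l Hl. rewrite layer_app, layer_label_row. destruct (F2 l Hl) as [G1 G2].
      destruct (Nat.eqb_spec (if i <? k then S i else 0) l) as [E|E].
      * destruct (Nat.ltb_spec i k); [|lia]. subst l. rewrite G2 by lia. simpl. split; auto; intros; lia.
      * rewrite app_nil_r. split; auto; intros; apply G2; lia.
    + rewrite covered_app, F3, covered_label_row. destruct (Nat.ltb_spec i k).
      * simpl. replace (k - i) with (S (k - S i)) by lia. simpl. lia.
      * simpl. replace (k - i) with 0 by lia. replace (k - S i) with 0 by lia. simpl; lia.
Qed.

Lemma greene_ge_rows k T : Forall (chain R) T ->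
  greene_ge R (reading_word T) k (list_sum (firstn k (map (@length _) T))).
Proof.
  intros HF. destruct (label_rows_props k T 0 HF) as [F1 [F2 F3]].
  exists (concat (rev (label_rows 0 k T))). split; [|split; [split|]].
  - assert (Hfst : forall i, map (map fst) (label_rows i k T) = T).
    { clear. induction T as [|r T IH]; intros i; simpl; auto.
      rewrite IH. unfold label_row; rewrite map_map; simpl; rewrite map_id; auto. }
    unfold reading_word; rewrite concat_map, map_rev, Hfst; auto.
  - auto.
  - intros l Hl; apply F2; auto.
  - rewrite F3, Nat.sub_0_r; auto.
Qed.

Lemma label_cols_fst j k (r : list A) : map fst (label_cols j k r) = r.
Proof. revert j; induction r; intros j; simpl; f_equal; auto. Qed.

Lemma label_cols_in j k (r : list A) x l : In (x, l) (label_cols j k r) -> l <> 0 ->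
  l <= k /\ exists i, l = S (j + i) /\ nth_error r i = Some x.
Proof.
  revert j; induction r as [|y r IH]; intros j Hin Hl; simpl in *; [destruct Hin|].
  destruct Hin as [E|Hin].
  - inversion E; subst. destruct (Nat.ltb_spec j k); [|lia]. split; [lia|]. exists 0; split; auto; lia.
  - destruct (IH (S j) Hin Hl) as [Hk [i [E1 E2]]]. split; auto. exists (S i); split; auto; lia.
Qed.

Lemma layer_label_cols_length j k (r : list A) l : l <> 0 -> length (layer l (label_cols j k r)) <= 1.
Proof.
  intros Hl.
  assert (Hlater : forall (r : list A) j j', j < j' -> l = S j -> layer l (label_cols j' k r) = []).
  { clear r j Hl. induction r as [|y r IH]; intros j j' Hj E; simpl; auto.
    rewrite layer_cons. destruct (Nat.ltb_spec j' k);
    destruct (Nat.eqb_spec (S j') l); try lia; destruct (Nat.eqb_spec 0 l); try lia; apply (IH j); lia. }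
  revert j; induction r as [|y r IH]; intros j; simpl; auto.
  rewrite layer_cons. destruct (Nat.eqb_spec (if j <? k then S j else 0) l) as [E|E]; auto.
  destruct (Nat.ltb_spec j k); [|lia]. rewrite (Hlater r j) by lia. simpl; lia.
Qed.

Lemma covered_label_cols j k (r : list A) : covered (label_cols j k r) = Nat.min (k - j) (length r).
Proof.
  revert j; induction r as [|y r IH]; intros j; simpl; [unfold covered; simpl; lia|].
  rewrite covered_cons, IH. destruct (Nat.ltb_spec j k); simpl; lia.
Qed.

Lemma greene_ge_antichain_rows k T : tableau (compl_rel R) T -> Forall P (concat T) ->
  greene_ge R (reading_word T) k (list_sum (map (fun r => Nat.min k (length r)) T)).
Proof.
  intros Ht HP. exists (concat (rev (map (label_cols 0 k) T))). split; [|split; [split|]].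
  - apply reading_word_relabel; intros; apply label_cols_fst.
  - apply Forall_forall; intros [x l] Hp. apply in_concat_rev in Hp as [r [Hr Hp]].
    apply in_map_iff in Hr as [r0 [<- _]].
    destruct (Nat.eq_dec l 0); simpl; [lia|]. apply label_cols_in in Hp as [Hk _]; auto.
  - intros l Hl. revert Ht HP.
    induction T as [|r T IH]; intros Ht HPT; simpl; [constructor|].
    rewrite concat_app; simpl; rewrite app_nil_r, layer_app. apply chain_app. split; [|split].
    + apply IH; [simpl in Ht; tauto|]. simpl in HPT; apply Forall_app in HPT; tauto.
    + apply chain_short, layer_label_cols_length; auto.
    + (* entries of a column, read from bottom to top, form an [R]-chain *)
      intros x y Hx Hy. apply layer_in_iff in Hx, Hy.
      apply in_concat_rev in Hx as [zs [Hzs Hx]]. apply in_map_iff in Hzs as [s [<- Hs]].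
      destruct (label_cols_in _ _ _ _ _ Hx Hl) as [_ [i [Ei Ex]]].
      destruct (label_cols_in _ _ _ _ _ Hy Hl) as [_ [i' [Ei' Ey]]].
      assert (i' = i) by lia. subst i'.
      assert (Hd : below (compl_rel R) r s)
        by (apply (tableau_below _ P (compl_rel R) (row_rel_compl _ _ _ HR) T); auto).
      destruct Hd as [_ Hd]. specialize (Hd i x).
      rewrite (nth_error_nth s i x Ex), (nth_error_nth r i x Ey) in Hd.
      unfold compl_rel in Hd. apply negb_false_iff, Hd, nth_error_Some; congruence.
  - rewrite covered_concat_rev, map_map. apply Nat.eq_le_incl. f_equal. apply map_ext; intros r.
    rewrite covered_label_cols, Nat.sub_0_r; auto.
Qed.

End GreeneLower.

(** * Greene's theorem and the transposed shape

    Both [rsk R w] and [rsk (compl_rel R) w] have reading words Knuth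
    equivalent to [w], so Greene's invariant of [w] can be read off either
    tableau: it is the size of the [k] first rows of the first one, and the
    size of the [k] first columns of the second one.  Hence the shape of
    [rsk R w] is the transpose of the shape of [rsk (compl_rel R) w]. *)

Section Greene.
Variables (A : Type) (P : A -> Prop) (R : A -> A -> bool).
Hypothesis HR : row_rel P R.

Lemma greene_ge_rsk w k m : Forall P w ->
  greene_ge R w k m <-> greene_ge R (reading_word (rsk R w)) k m.
Proof. intros HP. apply (greene_ge_knuth _ P); auto. apply (rsk_knuth _ P); auto. Qed.

Lemma greene_ge_rsk_compl w k m : Forall P w ->
  greene_ge R w k m <-> greene_ge R (reading_word (rsk (compl_rel R) w)) k m.
Proof.
  intros HP. apply (greene_ge_knuth _ P); auto.
  apply knuth_equiv_compl, (rsk_knuth _ P); auto. apply row_rel_compl; auto.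
Qed.

Lemma greene_le_rows w k m : Forall P w -> greene_ge R w k m ->
  m <= list_sum (firstn k (map (@length _) (rsk R w))).
Proof.
  intros HP Hg. apply greene_ge_rsk in Hg as [z [Ez [Hz Hc]]]; auto.
  apply labelled_reading_word in Ez as [Z [EZ ->]].
  assert (HPT : Forall P (concat (rsk R w)))
    by (apply (Permutation_Forall (Permutation_sym (rsk_perm _ R w))); auto).
  pose proof (covered_tableau_bound _ P R HR k Z) as Hb. rewrite EZ in Hb.
  specialize (Hb (rsk_tableau _ P R HR w HP) HPT Hz).
  rewrite <- EZ, map_map. erewrite map_ext; [apply (Nat.le_trans _ _ _ Hc Hb)|].
  intros; rewrite length_map; auto.
Qed.

Lemma greene_le_compl_rows w k m : Forall P w -> greene_ge R w k m ->
  m <= list_sum (map (fun r => Nat.min k (length r)) (rsk (compl_rel R) w)).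
Proof.
  intros HP Hg. apply greene_ge_rsk_compl in Hg as [z [Ez [Hz Hc]]]; auto.
  apply labelled_reading_word in Ez as [Z [EZ ->]].
  assert (HF : Forall (fun zr => chain (compl_rel R) (map fst zr)) Z).
  { pose proof (tableau_rows _ (compl_rel R) _
                  (rsk_tableau _ P _ (row_rel_compl _ _ _ HR) w HP)) as Hrows.
    rewrite <- EZ, Forall_map in Hrows; auto. }
  pose proof (covered_antichain_rows _ R k Z HF Hz) as Hb.
  rewrite <- EZ, map_map. erewrite map_ext; [apply (Nat.le_trans _ _ _ Hc Hb)|].
  intros; rewrite length_map; auto.
Qed.

Theorem greene_rows_columns w k : Forall P w ->
  list_sum (firstn k (map (@length _) (rsk R w))) =
  list_sum (map (fun r => Nat.min k (length r)) (rsk (compl_rel R) w)).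
Proof.
  intros HP. apply Nat.le_antisymm.
  - apply greene_le_compl_rows; auto. apply greene_ge_rsk; auto.
    apply greene_ge_rows, tableau_rows, (rsk_tableau _ P); auto.
  - apply greene_le_rows; auto. apply greene_ge_rsk_compl; auto.
    apply (greene_ge_antichain_rows _ P); auto.
    + apply (rsk_tableau _ P); [apply row_rel_compl|]; auto.
    + apply (Permutation_Forall (Permutation_sym (rsk_perm _ _ w))); auto.
Qed.

End Greene.

(** * Transposition of a partition *)

Section Transpose.

Lemma list_sum_map_add {B : Type} (f g : B -> nat) l :
  list_sum (map (fun j => f j + g j) l) = list_sum (map f l) + list_sum (map g l).
Proof. induction l; simpl; auto; lia. Qed.

Lemma firstn_seq k s n : firstn k (seq s n) = seq s (Nat.min k n).
Proof.
  revert k s; induction n as [|n IH]; intros k s; simpl.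
  - rewrite firstn_nil; destruct k; auto.
  - destruct k; simpl; auto. rewrite IH; auto.
Qed.

Lemma sum_indicator_seq n x :
  list_sum (map (fun j => if j <? x then 1 else 0) (seq 0 n)) = Nat.min n x.
Proof.
  induction n as [|n IH]; auto.
  rewrite seq_S, map_app, list_sum_app, IH. cbn [map list_sum fold_right Nat.add].
  destruct (Nat.ltb_spec n x); lia.
Qed.

(* Counting the cells of the first [n] columns column by column or row by row. *)
Lemma sum_column_heights n mu :
  list_sum (map (fun j => length (filter (fun y => j <? y) mu)) (seq 0 n)) =
  list_sum (map (fun y => Nat.min n y) mu).
Proof.
  induction mu as [|x mu IH]; simpl.
  - induction (seq 0 n); simpl; auto.
  - rewrite <- IH, <- sum_indicator_seq, <- list_sum_map_add. f_equal. apply map_ext; intros j.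
    destruct (j <? x); simpl; lia.
Qed.

Lemma transpose_sums k mu :
  list_sum (firstn k (transpose mu)) = list_sum (map (fun y => Nat.min k y) mu).
Proof.
  unfold transpose. rewrite firstn_map, firstn_seq, sum_column_heights. f_equal.
  apply map_ext_in; intros y Hy.
  assert (y <= list_max mu).
  { pose proof (proj1 (list_max_le mu _) (Nat.le_refl _)) as X.
    rewrite Forall_forall in X; auto. }
  lia.
Qed.

Lemma list_max_gt j mu : j < list_max mu -> exists y, In y mu /\ j < y.
Proof.
  induction mu as [|y mu IH]; simpl; intros H; [lia|].
  destruct (Nat.le_gt_cases (list_max mu) y).
  - exists y; split; auto; lia.
  - destruct IH as [y' [Hy Hjy]]; [lia|]. exists y'; auto.
Qed.

Lemma transpose_pos mu : forall x, In x (transpose mu) -> 0 < x.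
Proof.
  unfold transpose; intros x Hx. apply in_map_iff in Hx as [j [<- Hj]]. apply in_seq in Hj.
  destruct (list_max_gt j mu) as [y [Hy Hjy]]; [lia|].
  assert (Hin : In y (filter (fun k => j <? k) mu))
    by (apply filter_In; split; auto; apply Nat.ltb_lt; auto).
  destruct (filter (fun k => j <? k) mu); simpl; [destruct Hin|lia].
Qed.

Lemma eq_by_prefix_sums l1 : forall l2, (forall x, In x l1 -> 0 < x) -> (forall x, In x l2 -> 0 < x) ->
  (forall k, list_sum (firstn k l1) = list_sum (firstn k l2)) -> l1 = l2.
Proof.
  induction l1 as [|x l1 IH]; intros [|y l2] H1 H2 HS; auto.
  - specialize (HS 1); simpl in HS. specialize (H2 y (or_introl eq_refl)); lia.
  - specialize (HS 1); simpl in HS. specialize (H1 x (or_introl eq_refl)); lia.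
  - assert (x = y) by (specialize (HS 1); simpl in HS; lia). subst y. f_equal.
    apply IH; auto; [intros; apply H1|intros; apply H2|]; simpl; auto.
    intros k; specialize (HS (S k)); simpl in HS; lia.
Qed.

End Transpose.

Lemma tableau_pos {A : Type} (R : A -> A -> bool) T :
  tableau R T -> forall x, In x (map (@length _) T) -> 0 < x.
Proof.
  induction T as [|r T IH]; simpl; intros Ht x Hx; [destruct Hx|].
  destruct Ht as [_ [Hne [_ Ht]]]. destruct Hx as [<-|Hx]; auto.
  destruct r; simpl; [congruence|lia].
Qed.

Theorem rsk_shape_compl {A : Type} (P : A -> Prop) (R : A -> A -> bool) w :
  row_rel P R -> Forall P w ->
  map (@length _) (rsk R w) = transpose (map (@length _) (rsk (compl_rel R) w)).
Proof.
  intros HR HP. apply eq_by_prefix_sums.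
  - apply (tableau_pos R), (rsk_tableau _ P); auto.
  - apply transpose_pos.
  - intros k. rewrite transpose_sums, map_map. apply (greene_rows_columns _ P); auto.
Qed.

(** * Insertion only compares distinct occurrences

    Row insertion of [x] compares [x] with letters already in the tableau,
    i.e. with other occurrences.  Hence two relations agreeing on all pairs
    except pairs of equal letters from a class [g] of letters that never
    repeat in [w] produce the same tableau on [w]. *)

Lemma permutation_filter {B : Type} (f : B -> bool) l l' :
  Permutation l l' -> Permutation (filter f l) (filter f l').
Proof.
  induction 1; simpl; auto.
  - destruct (f x); auto.
  - destruct (f x), (f y); auto. constructor.
  - eapply Permutation_trans; eauto.
Qed.

Section AgreeingRelations.
Variables (A : Type) (P : A -> Prop) (g : A -> bool) (R1 R2 : A -> A -> bool).
Hypothesis Hagree : forall a b, P a -> P b -> (a <> b \/ g a = false) -> R1 a b = R2 a b.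

Lemma nodup_filter_perm l1 l2 : Permutation l1 l2 -> NoDup (filter g l1) -> NoDup (filter g l2).
Proof. intros Hp; apply Permutation_NoDup, permutation_filter; auto. Qed.

Lemma nodup_filter_other x l e : NoDup (filter g (x :: l)) -> In e l -> e <> x \/ g e = false.
Proof.
  intros Hn He. destruct (g e) eqn:Ge; auto. left; intros ->.
  simpl in Hn; rewrite Ge in Hn. inversion Hn as [|? ? Hnot]; subst. apply Hnot, filter_In; auto.
Qed.

Lemma row_ins_agree x r : (forall e, In e r -> R1 e x = R2 e x) -> row_ins R1 x r = row_ins R2 x r.
Proof.
  induction r as [|e r IH]; intros Ha; simpl; auto.
  rewrite Ha by (simpl; auto). rewrite IH; auto. intros; apply Ha; simpl; auto.
Qed.

Lemma tab_ins_agree x T : Forall P (x :: concat T) -> NoDup (filter g (x :: concat T)) ->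
  tab_ins R1 x T = tab_ins R2 x T.
Proof.
  revert x; induction T as [|r T IH]; intros x HP Hn; simpl; auto.
  rewrite Forall_forall in HP.
  rewrite row_ins_agree.
  2:{ intros e He. apply Hagree; try (apply HP; simpl; rewrite in_app_iff; auto).
      apply (nodup_filter_other x (r ++ concat T)); auto. apply in_or_app; auto. }
  destruct (row_ins R2 x r) as [[y|] r'] eqn:E; auto.
  apply row_ins_some in E as [a [b [-> _]]]. f_equal. apply IH.
  - apply Forall_forall; intros e [<-|He]; apply HP; simpl; rewrite !in_app_iff; simpl; auto.
  - (* the bumped letter [y] and the rows below form a part of the multiset *)
    assert (Hp : Permutation (x :: (a ++ y :: b) ++ concat T) ((x :: a ++ b) ++ y :: concat T)).
    { simpl; rewrite <- !app_assoc; simpl. apply perm_skip, Permutation_app_head, Permutation_middle. }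
    apply nodup_filter_perm in Hp; auto. rewrite filter_app in Hp. apply NoDup_app_remove_l in Hp; auto.
Qed.

Lemma rsk_agree w : Forall P w -> NoDup (filter g w) -> rsk R1 w = rsk R2 w.
Proof.
  induction w as [|x w IH] using rev_ind; intros HP Hn; auto.
  assert (Hp : Permutation (w ++ [x]) (x :: concat (rsk R2 w))).
  { eapply Permutation_trans; [apply Permutation_sym, Permutation_cons_append|].
    apply perm_skip, Permutation_sym, rsk_perm. }
  rewrite !rsk_snoc. rewrite filter_app in Hn. pose proof Hn as Hn'.
  apply NoDup_app_remove_r in Hn'. apply Forall_app in HP as [HP1 HP2].
  rewrite IH by auto. apply tab_ins_agree.
  - apply (Permutation_Forall Hp), Forall_app; auto.
  - apply (nodup_filter_perm _ _ Hp). rewrite filter_app; auto.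
Qed.

End AgreeingRelations.

(** * The generalised RSK of the paper

    For an order [le] and a splitting in which the letters satisfying
    [strictE] bump strictly, [row_insert] is [row_ins] for the relation
    "[b] may follow [a]", i.e. [b] does not bump [a].  For a linear order
    this relation is [a < b, or a = b with strictE b]; it is a row relation,
    and for the reverse order with the roles of [L_e] and [L_o] exchanged it
    is the complement, except on a pair of equal letters of [G]. *)

Definition follows (le : Letter -> Letter -> bool) (strictE : Letter -> bool) (a b : Letter) : bool :=
  negb (if strictE b then ltb le b a else le b a).

Lemma row_insert_row_ins le s x r : row_insert le s x r = row_ins (follows le s) x r.
Proof.
  induction r as [|e r IH]; simpl; auto. unfold follows. rewrite IH.
  destruct (if s x then ltb le x e else le x e); simpl; auto.
Qed.

Lemma RSK_rsk le s w : RSK le s w = rsk (follows le s) w.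
Proof.
  assert (Htab : forall x T, tab_insert le s x T = tab_ins (follows le s) x T).
  { intros x T; revert x; induction T as [|r T IH]; intros x; simpl; auto.
    rewrite row_insert_row_ins. destruct (row_ins (follows le s) x r) as [[y|] r']; auto.
    rewrite IH; auto. }
  unfold RSK, rsk. generalize (@nil (list Letter)) as T0.
  induction w as [|x w IH]; intros T0; simpl; auto. rewrite Htab; auto.
Qed.

Definition linear_order_on (P : Letter -> Prop) (le : Letter -> Letter -> bool) : Prop :=
  (forall a, P a -> le a a = true) /\
  (forall a b, P a -> P b -> le a b = true -> le b a = true -> a = b) /\
  (forall a b c, P a -> P b -> P c -> le a b = true -> le b c = true -> le a c = true) /\
  (forall a b, P a -> P b -> le a b = true \/ le b a = true).

Lemma linear_order_rev P le : linear_order_on P le -> linear_order_on P (rev_order le).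
Proof.
  unfold rev_order; intros [H1 [H2 [H3 H4]]]; split; [|split; [|split]]; intros *; eauto.
Qed.

Section Follows.
Variables (P : Letter -> Prop) (le : Letter -> Letter -> bool).
Hypothesis Hle : linear_order_on P le.

Lemma follows_spec s a b : P a -> P b ->
  (follows le s a b = true <-> (a = b /\ s b = true) \/ (a <> b /\ le a b = true)).
Proof.
  destruct Hle as [H1 [H2 [H3 H4]]]. intros Pa Pb. unfold follows, ltb.
  destruct (classic (a = b)) as [->|Hab].
  - rewrite H1 by auto. destruct (s b); simpl; intuition auto; discriminate.
  - destruct (le a b) eqn:E1, (le b a) eqn:E2, (s b); simpl;
      try (specialize (H2 a b Pa Pb E1 E2); contradiction);
      try (destruct (H4 a b Pa Pb); congruence); intuition auto; discriminate.
Qed.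

Lemma follows_row_rel s : row_rel P (follows le s).
Proof.
  pose proof Hle as [H1 [H2 [H3 H4]]]. split.
  - intros a b c Pa Pb Pc E1 E2.
    apply follows_spec in E1, E2; auto. apply follows_spec; auto.
    destruct E1 as [[<- Hs]|[Hab Eab]]; auto.
    destruct E2 as [[<- Hs]|[Hbc Ebc]]; auto.
    right; split; [|eapply H3; eauto]. intros <-. apply Hab; apply H2; auto.
  - intros a b c Pa Pb Pc E1.
    destruct (classic (c = a)) as [->|Hca]; [right; auto|].
    destruct (classic (c = b)) as [->|Hcb]; [left; auto|].
    apply follows_spec in E1; auto. rewrite !follows_spec by auto.
    destruct E1 as [[<- Hs]|[Hab Eab]].
    + destruct (H4 a c Pa Pc); [left|right]; right; split; auto.
    + destruct (le a c) eqn:Eac; [left; right; split; auto|].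
      destruct (H4 a c Pa Pc) as [X|X]; [congruence|]. right; right; split; auto. eapply H3; eauto.
Qed.

End Follows.

Lemma follows_transpose P le (Hle : linear_order_on P le) a b :
  P a -> P b -> (a <> b \/ isG a = false) ->
  follows (rev_order le) isLo a b = compl_rel (follows le isLe) a b.
Proof.
  intros Pa Pb Hq. pose proof (linear_order_rev _ _ Hle) as Hle'. unfold compl_rel.
  destruct (follows le isLe a b) eqn:E1, (follows (rev_order le) isLo a b) eqn:E2; simpl; auto.
  - apply (follows_spec _ _ Hle) in E1; auto. apply (follows_spec _ _ Hle') in E2; auto.
    unfold rev_order in E2. destruct Hle as [H1 [H2 _]].
    destruct E1 as [[Eab X]|[X Y]], E2 as [[Z W]|[Z W]]; try congruence.
    + subst; destruct b; simpl in *; discriminate.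
    + exfalso; apply X, H2; auto.
  - assert (E1' : follows le isLe a b <> true) by congruence.
    assert (E2' : follows (rev_order le) isLo a b <> true) by congruence.
    rewrite (follows_spec _ _ Hle) in E1' by auto. rewrite (follows_spec _ _ Hle') in E2' by auto.
    unfold rev_order in E2'. destruct Hle as [H1 [H2 [H3 H4]]].
    destruct (classic (a = b)) as [<-|Hab].
    + destruct Hq as [Hq|Hq]; [congruence|]. destruct a; simpl in *; intuition auto.
    + destruct (H4 a b Pa Pb); intuition auto.
Qed.

Lemma G_letters_filter w :
  G_letters w = map (fun a => match a with Gr x => x | _ => 0%R end) (filter isG w).
Proof. induction w as [|[i|j|x] w IH]; simpl; auto. rewrite IH; auto. Qed.

Theorem lemma3 (I : R -> Prop) (HI : is_interval I)
    (le : Letter -> Letter -> bool) (Hadm : admissible I le)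
    (n : nat) (w : list Letter) (Hlen : length w = n)
    (HwA : Forall (inA I) w) (Hdist : NoDup (G_letters w)) :
  phi le isLe w = transpose (phi (rev_order le) isLo w).
Proof.
  assert (Hle : linear_order_on (inA I) le)
    by (destruct Hadm as [H1 [H2 [H3 [H4 _]]]]; repeat split; auto).
  assert (HG : NoDup (filter isG w))
    by (rewrite G_letters_filter in Hdist; eapply NoDup_map_inv; eauto).
  unfold phi, shape. rewrite !RSK_rsk.
  rewrite (rsk_agree _ (inA I) isG _ (compl_rel (follows le isLe))
             (follows_transpose _ _ Hle) w HwA HG).
  apply (rsk_shape_compl (inA I)); auto. apply follows_row_rel; auto.
Qed.
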